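(* Let $\ell_E$ be a symmetric sequence space which does not coincide with $c_0$ or $\ell_\infty$ (up to equivalent norms). Then there exists a reflexive symmetric sequence space $\ell_F$ such that $\ell_F\supset\ell_E$.
   Context: For a bounded sequence $x$, $\mu(x)$ denotes the decreasing rearrangement of $|x|$. A symmetric sequence space is a linear subspace $\ell_E\subset\ell_\infty$ with a complete norm such that $x\in\ell_\infty$, $y\in\ell_E$, $\mu(x)\le\mu(y)$ imply $x\in\ell_E$ and $\|x\|_{\ell_E}\le\|y\|_{\ell_E}$. *)

From Stdlib Require Import Reals List.
From Coquelicot Require Import Coquelicot.
Open Scope R_scope.

Definition rseq := nat -> R.

Definition seq_zero : rseq := fun _ => 0.
Definition seq_add (x y : rseq) : rseq := fun k => x k + y k.
Definition seq_scal (a : R) (x : rseq) : rseq := fun k => a * x k.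
Definition seq_sub (x y : rseq) : rseq := fun k => x k - y k.

Definition bounded_seq (x : rseq) : Prop := exists M, forall k, Rabs (x k) <= M.

Definition c0_seq (x : rseq) : Prop :=
  forall eps, 0 < eps -> exists n0, forall k, (n0 <= k)%nat -> Rabs (x k) < eps.

(* sup norm ||x||_infty (meaningful for bounded x) *)
Definition linf_norm (x : rseq) : R :=
  real (Lub_Rbar (fun r => exists k, r = Rabs (x k))).

Definition card_gt_le (x : rseq) (s : R) (n : nat) : Prop :=
  forall l : list nat, NoDup l -> (forall k, In k l -> s < Rabs (x k)) ->
    (length l <= n)%nat.

(* decreasing rearrangement of |x|:
   mu x n = inf { s >= 0 : card {k : |x k| > s} <= n } *)
Definition mu (x : rseq) (n : nat) : R :=
  real (Glb_Rbar (fun s => 0 <= s /\ card_gt_le x s n)).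

Definition symmetric_seq_space (E : rseq -> Prop) (N : rseq -> R) : Prop :=
  E seq_zero /\
  (forall x y, E x -> E y -> E (seq_add x y)) /\
  (forall a x, E x -> E (seq_scal a x)) /\
  (forall x, E x -> bounded_seq x) /\
  (forall x, E x -> 0 <= N x) /\
  (forall x, E x -> N x = 0 -> forall k, x k = 0) /\
  (forall a x, E x -> N (seq_scal a x) = Rabs a * N x) /\
  (forall x y, E x -> E y -> N (seq_add x y) <= N x + N y) /\
  (forall u : nat -> rseq, (forall n, E (u n)) ->
     (forall eps, 0 < eps -> exists n0, forall m n, (n0 <= m)%nat -> (n0 <= n)%nat ->
          N (seq_sub (u m) (u n)) < eps) ->
     exists x, E x /\
       forall eps, 0 < eps -> exists n0, forall n, (n0 <= n)%nat ->
          N (seq_sub (u n) x) < eps) /\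
  (forall x y, bounded_seq x -> E y -> (forall n, mu x n <= mu y n) ->
     E x /\ N x <= N y).

Definition equiv_to_sup_norm (E : rseq -> Prop) (N : rseq -> R) : Prop :=
  exists c C, 0 < c /\ 0 < C /\
    forall x, E x -> c * linf_norm x <= N x /\ N x <= C * linf_norm x.

Definition is_c0_equiv (E : rseq -> Prop) (N : rseq -> R) : Prop :=
  (forall x, E x <-> c0_seq x) /\ equiv_to_sup_norm E N.

Definition is_linf_equiv (E : rseq -> Prop) (N : rseq -> R) : Prop :=
  (forall x, E x <-> bounded_seq x) /\ equiv_to_sup_norm E N.

Definition dual_elem (E : rseq -> Prop) (N : rseq -> R) (f : rseq -> R) : Prop :=
  (forall x y, E x -> E y -> f (seq_add x y) = f x + f y) /\
  (forall a x, E x -> f (seq_scal a x) = a * f x) /\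
  (exists K, forall x, E x -> Rabs (f x) <= K * N x).

Definition dual_norm_le (E : rseq -> Prop) (N : rseq -> R) (f : rseq -> R) (K : R) : Prop :=
  forall x, E x -> Rabs (f x) <= K * N x.

Definition bidual_elem (E : rseq -> Prop) (N : rseq -> R) (Phi : (rseq -> R) -> R) : Prop :=
  (forall f g, dual_elem E N f -> dual_elem E N g ->
     Phi (fun x => f x + g x) = Phi f + Phi g) /\
  (forall a f, dual_elem E N f -> Phi (fun x => a * f x) = a * Phi f) /\
  (exists C, forall f K, dual_elem E N f -> dual_norm_le E N f K ->
     Rabs (Phi f) <= C * K).

Definition reflexive (E : rseq -> Prop) (N : rseq -> R) : Prop :=
  forall Phi, bidual_elem E N Phi ->
    exists x, E x /\ forall f, dual_elem E N f -> Phi f = f x.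

From Stdlib Require Import Reals Lra Lia List Classical FunctionalExtensionality ClassicalEpsilon.
From Coquelicot Require Import Coquelicot.
Open Scope R_scope.

(* If E contains a nonzero vector, it contains all unit vectors, and its fundamental
   function phi n = N (indic n) satisfies mu x i * phi (i + 1) <= N x.  If phi is bounded,
   E is c_0 or l_infty up to an equivalent norm, which is excluded.  Otherwise we pick a
   nonincreasing, nonsummable weight w with sum_i w_i / phi (i + 1)^2 finite; then E embeds
   into the Lorentz space d(w,2) of the x with sum_i w_i mu_i(x)^2 finite.  Because w is
   not summable, a bounded functional cannot stay large on vectors supported far out
   (m disjoint such blocks of norm 1 would give f z >= m eps while ||z|| <= sqrt m), so
   every functional is a norm limit of finite combinations of coordinates.  Hence an element
   of the bidual is represented by its values on the coordinate functionals, and d(w,2) is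
   reflexive.  If E = {0}, the space l_2 = d(1,2) does the job. *)

Lemma Lub_Rbar_real_spec (S : R -> Prop) r0 B : S r0 -> (forall r, S r -> r <= B) ->
  (forall r, S r -> r <= real (Lub_Rbar S)) /\
  (forall b, (forall r, S r -> r <= b) -> real (Lub_Rbar S) <= b).
Proof.
  intros H0 HB. destruct (Lub_Rbar_correct S) as [ub lub].
  destruct (Lub_Rbar S) as [l| |].
  - split; [exact ub | intros b Hb; exact (lub (Finite b) Hb)].
  - exfalso. exact (lub (Finite B) HB).
  - exfalso. exact (ub r0 H0).
Qed.

Lemma Glb_Rbar_real_spec (S : R -> Prop) r0 B : S r0 -> (forall r, S r -> B <= r) ->
  (forall r, S r -> real (Glb_Rbar S) <= r) /\
  (forall b, (forall r, S r -> b <= r) -> b <= real (Glb_Rbar S)).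
Proof.
  intros H0 HB. destruct (Glb_Rbar_correct S) as [lb glb].
  destruct (Glb_Rbar S) as [l| |].
  - split; [exact lb | intros b Hb; exact (glb (Finite b) Hb)].
  - exfalso. exact (lb r0 H0).
  - exfalso. exact (glb (Finite B) HB).
Qed.

Lemma eq_0_of_abs_le_mul_eps d c : 0 <= c -> (forall eps, 0 < eps -> Rabs d <= c * eps) -> d = 0.
Proof.
  intros Hc H. apply Rabs_eq_0. pose proof (Rabs_pos d).
  destruct (Req_dec (Rabs d) 0) as [h|h]; auto. exfalso.
  specialize (H (Rabs d / (2 * (c + 1))) ltac:(apply Rdiv_lt_0_compat; lra)).
  assert (c * (Rabs d / (2 * (c + 1))) < Rabs d).
  { apply (Rmult_lt_reg_r (2 * (c + 1))). lra.
    replace (c * (Rabs d / (2 * (c + 1))) * (2 * (c + 1))) with (c * Rabs d) by (field; lra). nra. }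
  lra.
Qed.

Lemma Rabs_mult_self x : Rabs x * Rabs x = x * x.
Proof. rewrite <- Rabs_mult. apply Rabs_pos_eq. apply Rle_0_sqr. Qed.

Lemma sqr_le_of_abs_le a b : Rabs a <= Rabs b -> a * a <= b * b.
Proof.
  intros H. rewrite <- (Rabs_mult_self a), <- (Rabs_mult_self b).
  pose proof (Rabs_pos a). apply Rmult_le_compat; lra.
Qed.

Lemma sqr_le_of_le_abs a b : 0 <= a -> a <= Rabs b -> a * a <= b * b.
Proof. intros Ha H. apply sqr_le_of_abs_le. rewrite (Rabs_pos_eq a Ha). exact H. Qed.

Lemma Rabs_le_1_plus_sqr a : Rabs a <= 1 + a * a.
Proof.
  rewrite <- (Rabs_mult_self a). pose proof (Rabs_pos a).
  pose proof (Rle_0_sqr (Rabs a - 1/2)). unfold Rsqr in *. lra.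
Qed.

Lemma sqr_plus_le_weighted a b t : 0 < t ->
  (a + b) * (a + b) <= (1 + t) * (a * a) + (1 + / t) * (b * b).
Proof.
  intros Ht.
  assert ((1 + t) * (a * a) + (1 + / t) * (b * b) - (a + b) * (a + b)
          = (t * a - b) * (t * a - b) / t) by (field; lra).
  assert (0 <= (t * a - b) * (t * a - b) / t).
  { apply Rdiv_le_0_compat; [apply Rle_0_sqr | lra]. }
  lra.
Qed.

Lemma twice_abs_mul_le a b t : 0 < t -> 2 * Rabs (a * b) <= t * (a * a) + / t * (b * b).
Proof.
  intros Ht. rewrite Rabs_mult, <- (Rabs_mult_self a), <- (Rabs_mult_self b).
  set (p := Rabs a). set (q := Rabs b).
  assert (t * (p * p) + / t * (q * q) - 2 * (p * q) = (t * p - q) * (t * p - q) / t) by (field; lra).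
  assert (0 <= (t * p - q) * (t * p - q) / t).
  { apply Rdiv_le_0_compat; [apply Rle_0_sqr | lra]. }
  lra.
Qed.

Lemma le_2_sqrt_mul_of_amgm P Q M : 0 <= P -> 0 <= Q ->
  (forall t, 0 < t -> M <= t * P + Q / t) -> M <= 2 * sqrt P * sqrt Q.
Proof.
  intros HP HQ H.
  destruct (Req_dec P 0) as [hP|hP]; [|destruct (Req_dec Q 0) as [hQ|hQ]].
  - subst. rewrite sqrt_0, Rmult_0_r, Rmult_0_l.
    destruct (Rle_or_lt M 0) as [h|h]; auto. exfalso.
    specialize (H (2 * (Q + 1) / M) ltac:(apply Rdiv_lt_0_compat; lra)).
    replace (2 * (Q + 1) / M * 0 + Q / (2 * (Q + 1) / M)) with (Q * M / (2 * (Q + 1))) in H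
      by (field; lra).
    assert (Q * M / (2 * (Q + 1)) < M).
    { apply (Rmult_lt_reg_r (2 * (Q + 1))). lra. unfold Rdiv.
      rewrite Rmult_assoc, Rinv_l by lra. nra. }
    lra.
  - subst. rewrite sqrt_0, Rmult_0_r.
    destruct (Rle_or_lt M 0) as [h|h]; auto. exfalso.
    specialize (H (M / (2 * (P + 1))) ltac:(apply Rdiv_lt_0_compat; lra)).
    unfold Rdiv in H. rewrite Rmult_0_l, Rplus_0_r in H.
    assert (M * / (2 * (P + 1)) * P < M).
    { apply (Rmult_lt_reg_r (2 * (P + 1))). lra.
      replace (M * / (2 * (P + 1)) * P * (2 * (P + 1))) with (M * P) by (field; lra). nra. }
    lra.
  - assert (sP : 0 < sqrt P) by (apply sqrt_lt_R0; lra).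
    assert (sQ : 0 < sqrt Q) by (apply sqrt_lt_R0; lra).
    specialize (H (sqrt Q / sqrt P) ltac:(apply Rdiv_lt_0_compat; auto)).
    replace (sqrt Q / sqrt P * P + Q / (sqrt Q / sqrt P)) with (2 * sqrt P * sqrt Q) in H;
      [exact H|].
    pose proof (sqrt_sqrt P HP). pose proof (sqrt_sqrt Q HQ).
    set (p := sqrt P) in *. set (q := sqrt Q) in *.
    clearbody p q. subst P Q. field. lra.
Qed.

Lemma le_list_max (l : list nat) k : In k l -> (k <= list_max l)%nat.
Proof.
  intros Hk. assert (Hf : List.Forall (fun j => (j <= list_max l)%nat) l) by now apply list_max_le.
  rewrite List.Forall_forall in Hf. auto.
Qed.

Lemma fresh_nat (l : list nat) : exists k, ~ In k l.
Proof. exists (S (list_max l)). intros H. apply le_list_max in H. lia. Qed.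

Lemma NoDup_snoc (l : list nat) k : NoDup l -> ~ In k l -> NoDup (l ++ k :: nil).
Proof.
  intros H1 H2. apply NoDup_app; auto. repeat constructor; auto.
  intros a Ha [h|[]]; subst; tauto.
Qed.

Lemma exists_min_split (f : nat -> R) l : l <> nil ->
  exists l1 k l2, l = l1 ++ k :: l2 /\ forall j, In j l -> f k <= f j.
Proof.
  induction l as [|a t IH]; intros Hne; [congruence|].
  destruct t as [|b t'].
  - exists nil, a, nil. split; auto. intros j [h|[]]; subst; lra.
  - destruct IH as [l1 [k [l2 [Ht Hmin]]]]; [discriminate|].
    destruct (Rle_or_lt (f a) (f k)) as [h|h].
    + exists nil, a, (b :: t'). split; auto.
      intros j [hj|hj]; [subst; lra | specialize (Hmin j hj); lra].
    + exists (a :: l1), k, l2. split; [rewrite Ht; reflexivity|].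
      intros j [hj|hj]; [subst; lra | auto].
Qed.

Lemma nodup_lists_of_unbounded (P : nat -> Prop) :
  (forall n0, exists k, (n0 <= k)%nat /\ P k) ->
  forall n, exists l, NoDup l /\ length l = n /\ forall k, In k l -> P k.
Proof.
  intros Hinf n. induction n as [|n [l [Hnd [Hlen HP]]]].
  - exists nil. repeat split; [constructor | intros k []].
  - destruct (Hinf (S (list_max l))) as [k [Hk HPk]].
    assert (Hkl : ~ In k l) by (intros Hin; apply le_list_max in Hin; lia).
    exists (k :: l). repeat split; [constructor; auto | simpl; lia |].
    intros j [hj|hj]; [subst|]; auto.
Qed.

Lemma not_c0_large_lists x : ~ c0_seq x -> exists eps, 0 < eps /\
  forall n, exists l, NoDup l /\ length l = n /\ forall k, In k l -> eps <= Rabs (x k).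
Proof.
  intros Hx. apply not_all_ex_not in Hx as [eps Hx]. apply imply_to_and in Hx as [He Hx].
  exists eps. split; auto. apply nodup_lists_of_unbounded. intros n0.
  apply not_ex_all_not with (n := n0) in Hx. apply not_all_ex_not in Hx as [k Hk].
  apply imply_to_and in Hk as [Hk Hlt]. exists k. split; auto. lra.
Qed.

Lemma finite_prefix_bounded (x : rseq) n : exists M, forall k, (k < n)%nat -> Rabs (x k) <= M.
Proof.
  induction n as [|n [M HM]].
  - exists 0. intros k Hk. lia.
  - exists (Rmax M (Rabs (x n))). intros k Hk.
    destruct (Nat.eq_dec k n) as [->|h]; [apply Rmax_r|].
    eapply Rle_trans; [apply HM; lia | apply Rmax_l].
Qed.

Lemma c0_bounded x : c0_seq x -> bounded_seq x.
Proof.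
  intros H. destruct (H 1 ltac:(lra)) as [n0 Hn0]. destruct (finite_prefix_bounded x n0) as [M HM].
  exists (Rmax M 1). intros k. destruct (Nat.lt_ge_cases k n0) as [h|h].
  - eapply Rle_trans; [apply HM; auto | apply Rmax_l].
  - eapply Rle_trans; [left; apply Hn0; auto | apply Rmax_r].
Qed.

Lemma linf_norm_spec x : bounded_seq x ->
  (forall k, Rabs (x k) <= linf_norm x) /\
  (forall B, (forall k, Rabs (x k) <= B) -> linf_norm x <= B).
Proof.
  intros [M HM].
  destruct (Lub_Rbar_real_spec (fun r => exists k, r = Rabs (x k)) (Rabs (x 0%nat)) M)
    as [H1 H2]; [eauto | intros r [k ->]; auto |].
  split; [intros k; apply H1; eauto | intros B HB; apply H2; intros r [k ->]; auto].
Qed.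

Lemma Un_cv_const c : Un_cv (fun _ => c) c.
Proof. intros eps He. exists 0%nat. intros n _. unfold R_dist. rewrite Rminus_diag, Rabs_R0. auto. Qed.

Lemma Un_cv_le (v : nat -> R) L B n0 : Un_cv v L -> (forall m, (n0 <= m)%nat -> v m <= B) -> L <= B.
Proof.
  intros Hv Hb. destruct (Rle_or_lt L B) as [h|h]; auto. exfalso.
  destruct (Hv (L - B) ltac:(lra)) as [N HN].
  specialize (HN (Nat.max N n0) ltac:(lia)). specialize (Hb (Nat.max N n0) ltac:(lia)).
  unfold R_dist in HN. apply Rabs_def2 in HN. lra.
Qed.

(** * The decreasing rearrangement *)

Lemma card_gt_le_of_bound x M n : (forall k, Rabs (x k) <= M) -> card_gt_le x M n.
Proof.
  intros HM [|k l] _ Hl; simpl; [lia|].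
  specialize (Hl k (or_introl eq_refl)). specialize (HM k). lra.
Qed.

Lemma mu_spec x n : bounded_seq x ->
  (forall s, 0 <= s -> card_gt_le x s n -> mu x n <= s) /\
  (forall v, (forall s, 0 <= s -> card_gt_le x s n -> v <= s) -> v <= mu x n).
Proof.
  intros [M HM].
  assert (HM0 : 0 <= M) by (pose proof (Rabs_pos (x 0%nat)); specialize (HM 0%nat); lra).
  destruct (Glb_Rbar_real_spec (fun s => 0 <= s /\ card_gt_le x s n) M 0) as [H1 H2].
  - split; [exact HM0 | apply card_gt_le_of_bound; exact HM].
  - intros r [Hr _]; exact Hr.
  - split; [intros s Hs Hc; apply H1; auto | intros v Hv; apply H2; intros r [Hr Hc]; auto].
Qed.

Lemma mu_le x n s : bounded_seq x -> 0 <= s -> card_gt_le x s n -> mu x n <= s.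
Proof. intros Hb. apply (mu_spec x n Hb). Qed.

Lemma mu_ge x n v : bounded_seq x ->
  (forall s, 0 <= s -> card_gt_le x s n -> v <= s) -> v <= mu x n.
Proof. intros Hb. apply (mu_spec x n Hb). Qed.

Lemma mu_nonneg x n : bounded_seq x -> 0 <= mu x n.
Proof. intros Hb. apply mu_ge; auto. Qed.

Lemma mu_ge_of_list x n v l : bounded_seq x -> NoDup l -> (n < length l)%nat ->
  (forall k, In k l -> v <= Rabs (x k)) -> v <= mu x n.
Proof.
  intros Hb Hnd Hlen Hv. apply mu_ge; auto. intros s Hs Hc.
  destruct (Rle_or_lt v s) as [h|h]; auto. exfalso.
  assert (length l <= n)%nat by (apply Hc; auto; intros k Hk; specialize (Hv k Hk); lra).
  lia.
Qed.

Lemma large_list_of_lt_mu x n s : bounded_seq x -> 0 <= s -> s < mu x n ->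
  exists l, NoDup l /\ (forall k, In k l -> s < Rabs (x k)) /\ (n < length l)%nat.
Proof.
  intros Hb Hs Hlt. apply NNPP. intros Hno.
  assert (card_gt_le x s n).
  { intros l Hnd Hl. destruct (Nat.le_gt_cases (length l) n) as [h|h]; auto.
    exfalso. apply Hno. exists l. auto. }
  pose proof (mu_le x n s Hb Hs H). lra.
Qed.

Lemma abs_le_mu0 x k : bounded_seq x -> Rabs (x k) <= mu x 0.
Proof.
  intros Hb. apply (mu_ge_of_list x 0 _ (k :: nil) Hb).
  - repeat constructor. intros [].
  - simpl; lia.
  - intros j [h|[]]; subst; lra.
Qed.

Lemma mu_le_of_abs_le x y n : bounded_seq y -> (forall k, Rabs (x k) <= Rabs (y k)) ->
  mu x n <= mu y n.
Proof.
  intros Hb Hxy.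
  assert (Hbx : bounded_seq x).
  { destruct Hb as [M HM]. exists M. intros k. specialize (Hxy k). specialize (HM k). lra. }
  apply mu_ge; auto. intros s Hs Hc. apply mu_le; auto.
  intros l Hnd Hl. apply Hc; auto. intros k Hk. specialize (Hl k Hk). specialize (Hxy k). lra.
Qed.

Lemma mu_antitone x n m : bounded_seq x -> (n <= m)%nat -> mu x m <= mu x n.
Proof.
  intros Hb Hnm. apply mu_ge; auto. intros s Hs Hc. apply mu_le; auto.
  intros l Hnd Hl. specialize (Hc l Hnd Hl). lia.
Qed.

Lemma mu_le_of_sup x a j : bounded_seq x -> 0 <= a -> (forall k, Rabs (x k) <= a) -> mu x j <= a.
Proof. intros Hb Ha Hk. apply mu_le; auto. apply card_gt_le_of_bound; auto. Qed.

Lemma mu_finite_support x L j : bounded_seq x -> (forall k, ~ In k L -> x k = 0) ->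
  (length L <= j)%nat -> mu x j <= 0.
Proof.
  intros Hb HL Hj. apply mu_le; auto; [lra|].
  intros l Hnd Hl.
  assert (incl l L).
  { intros k Hk. apply NNPP. intros h.
    specialize (Hl k Hk). rewrite (HL k h), Rabs_R0 in Hl. lra. }
  pose proof (NoDup_incl_length Hnd H). lia.
Qed.

(** * Weighted sums and the rearrangement inequality *)

Definition sq_seq (x : rseq) : rseq := fun k => x k * x k.

Fixpoint psum (a : nat -> R) (n : nat) : R :=
  match n with O => 0 | S n' => psum a n' + a n' end.

Fixpoint wsum (w a : nat -> R) (off : nat) (l : list nat) : R :=
  match l with nil => 0 | k :: l' => w off * a k + wsum w a (S off) l' end.

Definition nonincr_weight (w : nat -> R) := (forall i, 0 <= w i) /\ (forall i, w (S i) <= w i).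

Definition divergent (w : nat -> R) := forall M, exists n, M < psum w n.

Lemma sq_seq_nonneg x k : 0 <= sq_seq x k.
Proof. apply Rle_0_sqr. Qed.

Lemma psum_nonneg a n : (forall i, 0 <= a i) -> 0 <= psum a n.
Proof. intros Ha. induction n as [|n IH]; simpl; [lra | specialize (Ha n); lra]. Qed.

Lemma psum_le a b n : (forall i, a i <= b i) -> psum a n <= psum b n.
Proof. intros Hab. induction n as [|n IH]; simpl; [lra | specialize (Hab n); lra]. Qed.

Lemma psum_scal c a n : psum (fun i => c * a i) n = c * psum a n.
Proof. induction n as [|n IH]; simpl; [|rewrite IH]; ring. Qed.

Lemma psum_le_psum_of_le a n m : (forall i, 0 <= a i) -> (n <= m)%nat -> psum a n <= psum a m.
Proof. intros Ha Hnm. induction Hnm as [|m _ IH]; simpl; [lra | specialize (Ha m); lra]. Qed.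

Lemma nonincr_weight_le w i j : nonincr_weight w -> (i <= j)%nat -> w j <= w i.
Proof. intros [_ Hw] H. induction H as [|m _ IH]; [lra | specialize (Hw m); lra]. Qed.

Lemma wsum_nonneg w a off l : (forall i, 0 <= w i) -> (forall k, 0 <= a k) -> 0 <= wsum w a off l.
Proof.
  intros Hw Ha. revert off; induction l as [|k l IH]; intros off; simpl; [lra|].
  pose proof (Rmult_le_pos _ _ (Hw off) (Ha k)). specialize (IH (S off)). lra.
Qed.

Lemma wsum_le w a b off l : (forall i, 0 <= w i) -> (forall k, In k l -> a k <= b k) ->
  wsum w a off l <= wsum w b off l.
Proof.
  intros Hw. revert off; induction l as [|k l IH]; intros off Hab; simpl; [lra|].
  assert (w off * a k <= w off * b k) by (apply Rmult_le_compat_l; [apply Hw | apply Hab; simpl; auto]).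
  assert (wsum w a (S off) l <= wsum w b (S off) l) by (apply IH; intros j Hj; apply Hab; simpl; auto).
  lra.
Qed.

Lemma wsum_ext w a b off l : (forall k, In k l -> a k = b k) -> wsum w a off l = wsum w b off l.
Proof.
  revert off; induction l as [|k l IH]; intros off Hab; simpl; [reflexivity|].
  rewrite (Hab k), (IH (S off)); auto. intros j Hj; apply Hab; simpl; auto. simpl; auto.
Qed.

Lemma wsum_eq0 w a off l : (forall k, In k l -> a k = 0) -> wsum w a off l = 0.
Proof.
  intros H. transitivity (wsum w (fun _ => 0) off l); [apply wsum_ext; auto|]. clear H.
  revert off; induction l as [|k l IH]; intros off; simpl; [reflexivity | rewrite IH; ring].
Qed.

Lemma wsum_app w a off l1 l2 :
  wsum w a off (l1 ++ l2) = wsum w a off l1 + wsum w a (off + length l1) l2.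
Proof.
  revert off; induction l1 as [|k l IH]; intros off; simpl.
  - rewrite Nat.add_0_r. ring.
  - rewrite IH. replace (S off + length l)%nat with (off + S (length l))%nat by lia. ring.
Qed.

Lemma wsum_lin w a b c d off l :
  wsum w (fun k => c * a k + d * b k) off l = c * wsum w a off l + d * wsum w b off l.
Proof. revert off; induction l as [|k l IH]; intros off; simpl; [|rewrite IH]; ring. Qed.

Lemma wsum_scal w a c off l : wsum w (fun k => c * a k) off l = c * wsum w a off l.
Proof. revert off; induction l as [|k l IH]; intros off; simpl; [|rewrite IH]; ring. Qed.

Lemma wsum_abs w a off l : (forall i, 0 <= w i) ->
  Rabs (wsum w a off l) <= wsum w (fun k => Rabs (a k)) off l.
Proof.
  intros Hw. revert off; induction l as [|k l IH]; intros off; simpl; [rewrite Rabs_R0; lra|].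
  eapply Rle_trans; [apply Rabs_triang|].
  rewrite Rabs_mult, (Rabs_pos_eq (w off)) by apply Hw. specialize (IH (S off)). lra.
Qed.

Lemma wsum_offset_le w a off off' l : nonincr_weight w -> (forall k, 0 <= a k) ->
  (off <= off')%nat -> wsum w a off' l <= wsum w a off l.
Proof.
  intros Hw Ha. revert off off'; induction l as [|k l IH]; intros off off' Ho; simpl; [lra|].
  assert (w off' * a k <= w off * a k)
    by (apply Rmult_le_compat_r; [apply Ha | apply nonincr_weight_le; auto]).
  assert (wsum w a (S off') l <= wsum w a (S off) l) by (apply IH; lia).
  lra.
Qed.

Lemma wsum_le_const w a l eta : (forall i, 0 <= w i) -> (forall k, In k l -> a k <= eta) ->
  wsum w a 0 l <= eta * psum w (length l).
Proof.
  intros Hw. induction l as [|k l IH] using rev_ind; intros Hk; simpl; [lra|].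
  rewrite wsum_app, length_app, Nat.add_1_r. simpl. rewrite Rplus_0_r.
  assert (w (length l) * a k <= w (length l) * eta)
    by (apply Rmult_le_compat_l; [apply Hw | apply Hk, in_or_app; simpl; auto]).
  assert (wsum w a 0 l <= eta * psum w (length l)) by (apply IH; intros j Hj; apply Hk, in_or_app; auto).
  lra.
Qed.

Lemma const_le_wsum w a l eta : (forall i, 0 <= w i) -> (forall k, In k l -> eta <= a k) ->
  eta * psum w (length l) <= wsum w a 0 l.
Proof.
  intros Hw. induction l as [|k l IH] using rev_ind; intros Hk; simpl; [lra|].
  rewrite wsum_app, length_app, Nat.add_1_r. simpl. rewrite Rplus_0_r.
  assert (w (length l) * eta <= w (length l) * a k)
    by (apply Rmult_le_compat_l; [apply Hw | apply Hk, in_or_app; simpl; auto]).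
  assert (eta * psum w (length l) <= wsum w a 0 l) by (apply IH; intros j Hj; apply Hk, in_or_app; auto).
  lra.
Qed.

(* Dropping indices where [a] vanishes moves the remaining ones to larger weights. *)
Lemma wsum_le_filter w a p off l : nonincr_weight w -> (forall k, 0 <= a k) ->
  (forall k, In k l -> p k = false -> a k = 0) -> wsum w a off l <= wsum w a off (filter p l).
Proof.
  intros Hw Ha. revert off; induction l as [|k l IH]; intros off Hz; simpl; [lra|].
  assert (IH' : wsum w a (S off) l <= wsum w a (S off) (filter p l))
    by (apply IH; intros j Hj; apply Hz; simpl; auto).
  destruct (p k) eqn:Ep; simpl; [lra|].
  rewrite (Hz k (or_introl eq_refl) Ep), Rmult_0_r, Rplus_0_l.
  eapply Rle_trans; [exact IH'|]. apply wsum_offset_le; auto.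
Qed.

(* The exchange step of the rearrangement inequality. *)
Lemma wsum_cons_le_exchange w a off k l : nonincr_weight w -> (forall j, In j l -> a k <= a j) ->
  wsum w a off (k :: l) <= wsum w a off l + w (off + length l)%nat * a k.
Proof.
  intros Hw. revert off; induction l as [|b l IH]; intros off Hj; simpl.
  - rewrite Nat.add_0_r. lra.
  - assert (Hb : a k <= a b) by (apply Hj; simpl; auto).
    specialize (IH (S off) ltac:(intros j Hj'; apply Hj; simpl; auto)). simpl in IH.
    rewrite Nat.add_succ_r.
    assert (w (S off) <= w off) by apply Hw.
    assert (0 <= (w off - w (S off)) * (a b - a k)) by (apply Rmult_le_pos; lra).
    lra.
Qed.

Lemma wsum_lim w (a : nat -> nat -> R) b off l : (forall k, Un_cv (fun m => a m k) (b k)) ->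
  Un_cv (fun m => wsum w (a m) off l) (wsum w b off l).
Proof.
  intros H. revert off; induction l as [|k l IH]; intros off; simpl; [apply Un_cv_const|].
  apply CV_plus; auto. apply CV_mult; auto. apply Un_cv_const.
Qed.

Definition mu_sqsum (w : nat -> R) (x : rseq) := psum (fun i => w i * (mu x i * mu x i)).

Lemma wsum_le_mu_sqsum w x l : nonincr_weight w -> bounded_seq x -> NoDup l ->
  wsum w (sq_seq x) 0 l <= mu_sqsum w x (length l).
Proof.
  intros Hw Hb. remember (length l) as n eqn:Hlen. revert l Hlen.
  induction n as [|m IH]; intros l Hlen Hnd.
  - destruct l; [simpl; unfold mu_sqsum; simpl; lra | discriminate].
  - assert (Hne : l <> nil) by (intros ->; discriminate).
    destruct (exists_min_split (fun k => Rabs (x k)) l Hne) as [l1 [k [l2 [-> Hmin]]]].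
    rewrite length_app in Hlen. simpl in Hlen.
    assert (Hk : Rabs (x k) <= mu x m) by (apply (mu_ge_of_list x m _ _ Hb Hnd); [rewrite length_app; simpl; lia | auto]).
    assert (Hex : wsum w (sq_seq x) (0 + length l1) (k :: l2) <=
              wsum w (sq_seq x) (0 + length l1) l2 + w m * sq_seq x k).
    { replace m with (0 + length l1 + length l2)%nat by lia.
      apply wsum_cons_le_exchange; auto. intros j Hj. apply sqr_le_of_abs_le.
      apply Hmin, in_or_app; simpl; auto. }
    assert (HIH : wsum w (sq_seq x) 0 (l1 ++ l2) <= mu_sqsum w x m).
    { apply IH; [rewrite length_app; lia | eapply NoDup_remove_1; eauto]. }
    rewrite wsum_app in HIH |- *.
    assert (w m * sq_seq x k <= w m * (mu x m * mu x m)).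
    { apply Rmult_le_compat_l; [apply Hw|]. apply sqr_le_of_abs_le.
      rewrite (Rabs_pos_eq (mu x m)) by (apply mu_nonneg; auto). exact Hk. }
    change (mu_sqsum w x (S m)) with (mu_sqsum w x m + w m * (mu x m * mu x m)). lra.
Qed.

Lemma mu_sqsum_approx w y r : nonincr_weight w -> bounded_seq y -> 0 <= r < 1 -> forall n,
  exists l, NoDup l /\ length l = n /\ r * r * mu_sqsum w y n <= wsum w (sq_seq y) 0 l.
Proof.
  intros Hw Hb Hr n. induction n as [|n [l [Hnd [Hlen Hle]]]].
  - exists nil. unfold mu_sqsum. simpl. repeat split; [constructor | lra].
  - pose proof (mu_nonneg y n Hb) as Hm0.
    assert (Hrm : 0 <= r * mu y n) by (apply Rmult_le_pos; lra).
    assert (Hk : exists k, ~ In k l /\ r * mu y n <= Rabs (y k)).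
    { destruct (Req_dec (mu y n) 0) as [h|h].
      - destruct (fresh_nat l) as [k Hk]. exists k. split; auto. rewrite h, Rmult_0_r. apply Rabs_pos.
      - destruct (large_list_of_lt_mu y n (r * mu y n) Hb Hrm ltac:(nra)) as [L [HL1 [HL2 HL3]]].
        apply NNPP. intros Hno.
        assert (incl L l).
        { intros k Hk. apply NNPP. intros Hkl. apply Hno. exists k. split; auto.
          specialize (HL2 k Hk). lra. }
        pose proof (NoDup_incl_length HL1 H). lia. }
    destruct Hk as [k [Hkl Hk]].
    exists (l ++ k :: nil). split; [apply NoDup_snoc; auto|].
    split; [rewrite length_app; simpl; lia|].
    rewrite wsum_app, Hlen. unfold mu_sqsum in *. simpl.
    assert (w n * (r * mu y n * (r * mu y n)) <= w n * sq_seq y k)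
      by (apply Rmult_le_compat_l; [apply Hw | apply sqr_le_of_le_abs; auto]).
    nra.
Qed.

(** * The Lorentz sequence space d(w,2) *)

(* The Lorentz space d(w,2), encoded without rearranging: by [wsum_le_mu_sqsum] and
   [mu_sqsum_approx], the supremum of the weighted sums of squares over injective index
   lists is [sum_i w i * mu x i ^ 2]. *)
Definition lorentz (w : nat -> R) (x : rseq) : Prop :=
  exists B, forall l, NoDup l -> wsum w (sq_seq x) 0 l <= B.

Definition lorentz_sq (w : nat -> R) (x : rseq) : R :=
  real (Lub_Rbar (fun r => exists l, NoDup l /\ r = wsum w (sq_seq x) 0 l)).

Definition lorentz_norm (w : nat -> R) (x : rseq) : R := sqrt (lorentz_sq w x).

Section Lorentz.

Variable w : nat -> R.
Hypothesis w_nonincr : nonincr_weight w.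
Hypothesis w0_pos : 0 < w 0%nat.

Lemma lorentz_sq_spec x b : (forall l, NoDup l -> wsum w (sq_seq x) 0 l <= b) ->
  (forall l, NoDup l -> wsum w (sq_seq x) 0 l <= lorentz_sq w x) /\
  (forall b', (forall l, NoDup l -> wsum w (sq_seq x) 0 l <= b') -> lorentz_sq w x <= b').
Proof.
  intros Hb.
  destruct (Lub_Rbar_real_spec (fun r => exists l, NoDup l /\ r = wsum w (sq_seq x) 0 l) 0 b)
    as [H1 H2].
  - exists nil. split; [constructor | reflexivity].
  - intros r [l [Hl ->]]. auto.
  - split; [intros l Hl; apply H1; eauto | intros b' Hb'; apply H2; intros r [l [Hl ->]]; auto].
Qed.

Lemma wsum_le_lorentz_sq x l : lorentz w x -> NoDup l -> wsum w (sq_seq x) 0 l <= lorentz_sq w x.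
Proof. intros [B HB]. apply (lorentz_sq_spec x B HB). Qed.

Lemma lorentz_of_wsum_le x b : (forall l, NoDup l -> wsum w (sq_seq x) 0 l <= b) ->
  lorentz w x /\ lorentz_sq w x <= b.
Proof. intros Hb. split; [exists b; auto | apply (lorentz_sq_spec x b Hb); auto]. Qed.

Lemma lorentz_sq_approx x eps : lorentz w x -> 0 < eps ->
  exists l, NoDup l /\ lorentz_sq w x - eps < wsum w (sq_seq x) 0 l.
Proof.
  intros Hx He. apply NNPP. intros Hno.
  assert (Hle : forall l, NoDup l -> wsum w (sq_seq x) 0 l <= lorentz_sq w x - eps).
  { intros l Hl. apply Rnot_lt_le. intros Hlt. apply Hno. eauto. }
  destruct (lorentz_of_wsum_le x _ Hle). lra.
Qed.

Lemma lorentz_sq_nonneg x : lorentz w x -> 0 <= lorentz_sq w x.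
Proof. intros Hx. exact (wsum_le_lorentz_sq x nil Hx (NoDup_nil _)). Qed.

Lemma lorentz_norm_nonneg x : 0 <= lorentz_norm w x.
Proof. apply sqrt_pos. Qed.

Lemma lorentz_norm_sqr x : lorentz w x -> lorentz_norm w x * lorentz_norm w x = lorentz_sq w x.
Proof. intros Hx. apply sqrt_sqrt, lorentz_sq_nonneg, Hx. Qed.

Lemma lorentz_norm_le_of_sq_le x e : 0 <= e -> lorentz_sq w x <= e * e -> lorentz_norm w x <= e.
Proof. intros He H. rewrite <- (sqrt_square e He). apply sqrt_le_1_alt, H. Qed.

Lemma sqr_coord_le_lorentz_sq x k : lorentz w x -> w 0%nat * (x k * x k) <= lorentz_sq w x.
Proof.
  intros Hx. pose proof (wsum_le_lorentz_sq x (k :: nil) Hx) as H.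
  simpl in H. unfold sq_seq in H. rewrite Rplus_0_r in H. apply H.
  repeat constructor. intros [].
Qed.

Lemma lorentz_bounded x : lorentz w x -> bounded_seq x.
Proof.
  intros Hx. exists (1 + lorentz_sq w x / w 0%nat). intros k.
  pose proof (Rabs_le_1_plus_sqr (x k)).
  assert (x k * x k <= lorentz_sq w x / w 0%nat).
  { apply (Rmult_le_reg_l (w 0%nat)); auto.
    replace (w 0%nat * (lorentz_sq w x / w 0%nat)) with (lorentz_sq w x) by (field; lra).
    apply sqr_coord_le_lorentz_sq, Hx. }
  lra.
Qed.

Lemma abs_coord_le_lorentz_norm x k : lorentz w x ->
  Rabs (x k) <= lorentz_norm w x / sqrt (w 0%nat).
Proof.
  intros Hx. pose proof (sqr_coord_le_lorentz_sq x k Hx).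
  pose proof (sqrt_lt_R0 _ w0_pos) as Hs.
  apply (Rmult_le_reg_l (sqrt (w 0%nat))); auto.
  replace (sqrt (w 0%nat) * (lorentz_norm w x / sqrt (w 0%nat))) with (lorentz_norm w x)
    by (field; lra).
  unfold lorentz_norm. rewrite <- (sqrt_Rsqr_abs (x k)), <- sqrt_mult_alt by lra.
  apply sqrt_le_1_alt. unfold Rsqr. lra.
Qed.

Lemma lorentz_norm_eq0 x : lorentz w x -> lorentz_norm w x = 0 -> forall k, x k = 0.
Proof.
  intros Hx H0 k. pose proof (abs_coord_le_lorentz_norm x k Hx) as H.
  rewrite H0 in H. unfold Rdiv in H. rewrite Rmult_0_l in H.
  apply Rabs_eq_0. pose proof (Rabs_pos (x k)). lra.
Qed.

Lemma lorentz_of_zero x : (forall k, x k = 0) -> lorentz w x /\ lorentz_sq w x <= 0.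
Proof.
  intros H0. apply lorentz_of_wsum_le. intros l _.
  rewrite wsum_eq0; [lra|]. intros k _. unfold sq_seq. rewrite H0. ring.
Qed.

Lemma wsum_sq_scal x a l : wsum w (sq_seq (seq_scal a x)) 0 l = a * a * wsum w (sq_seq x) 0 l.
Proof. rewrite <- wsum_scal. apply wsum_ext. intros k _. unfold sq_seq, seq_scal. ring. Qed.

Lemma lorentz_scal x a : lorentz w x -> lorentz w (seq_scal a x).
Proof.
  intros Hx. apply (lorentz_of_wsum_le _ (a * a * lorentz_sq w x)). intros l Hl.
  rewrite wsum_sq_scal. apply Rmult_le_compat_l; [apply Rle_0_sqr | apply wsum_le_lorentz_sq; auto].
Qed.

Lemma lorentz_sq_scal x a : lorentz w x -> lorentz_sq w (seq_scal a x) = a * a * lorentz_sq w x.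
Proof.
  intros Hx. apply Rle_antisym.
  - apply (lorentz_of_wsum_le _ (a * a * lorentz_sq w x)). intros l Hl.
    rewrite wsum_sq_scal. apply Rmult_le_compat_l; [apply Rle_0_sqr | apply wsum_le_lorentz_sq; auto].
  - destruct (Req_dec a 0) as [->|h].
    + rewrite !Rmult_0_l. apply lorentz_sq_nonneg, lorentz_scal, Hx.
    + assert (Ha : 0 < a * a) by (apply Rsqr_pos_lt; auto).
      apply (Rmult_le_reg_r (/ (a * a))); [apply Rinv_0_lt_compat; auto|].
      replace (a * a * lorentz_sq w x * / (a * a)) with (lorentz_sq w x) by (field; auto).
      apply (lorentz_of_wsum_le x). intros l Hl.
      pose proof (wsum_le_lorentz_sq _ l (lorentz_scal x a Hx) Hl) as H.
      rewrite wsum_sq_scal in H.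
      apply (Rmult_le_reg_l (a * a)); auto.
      replace (a * a * (lorentz_sq w (seq_scal a x) * / (a * a))) with (lorentz_sq w (seq_scal a x))
        by (field; auto).
      exact H.
Qed.

Lemma lorentz_norm_scal x a : lorentz w x -> lorentz_norm w (seq_scal a x) = Rabs a * lorentz_norm w x.
Proof.
  intros Hx. unfold lorentz_norm. rewrite lorentz_sq_scal, sqrt_mult_alt by (auto; apply Rle_0_sqr).
  f_equal. apply sqrt_Rsqr_abs.
Qed.

Lemma lorentz_add x y : lorentz w x -> lorentz w y -> lorentz w (seq_add x y).
Proof.
  intros Hx Hy. exists (2 * lorentz_sq w x + 2 * lorentz_sq w y). intros l Hl.
  pose proof (wsum_le_lorentz_sq x l Hx Hl). pose proof (wsum_le_lorentz_sq y l Hy Hl).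
  assert (wsum w (sq_seq (seq_add x y)) 0 l <= 2 * wsum w (sq_seq x) 0 l + 2 * wsum w (sq_seq y) 0 l).
  { rewrite <- wsum_lin. apply wsum_le; [apply w_nonincr|]. intros k _. unfold sq_seq, seq_add.
    pose proof (Rle_0_sqr (x k - y k)). unfold Rsqr in *. lra. }
  lra.
Qed.

Lemma seq_sub_add_opp x y : seq_sub x y = seq_add x (seq_scal (-1) y).
Proof. apply functional_extensionality. intros k. unfold seq_sub, seq_add, seq_scal. ring. Qed.

Lemma lorentz_sub x y : lorentz w x -> lorentz w y -> lorentz w (seq_sub x y).
Proof. intros Hx Hy. rewrite seq_sub_add_opp. apply lorentz_add, lorentz_scal; auto. Qed.

(* Minkowski's inequality, via [(a + b)^2 <= (1 + t) a^2 + (1 + 1/t) b^2] optimised over [t]. *)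
Lemma lorentz_norm_triangle x y : lorentz w x -> lorentz w y ->
  lorentz_norm w (seq_add x y) <= lorentz_norm w x + lorentz_norm w y.
Proof.
  intros Hx Hy.
  set (A := lorentz_sq w x). set (B := lorentz_sq w y).
  assert (HA : 0 <= A) by (apply lorentz_sq_nonneg; auto).
  assert (HB : 0 <= B) by (apply lorentz_sq_nonneg; auto).
  apply lorentz_norm_le_of_sq_le;
    [pose proof (lorentz_norm_nonneg x); pose proof (lorentz_norm_nonneg y); lra|].
  refine (proj2 (lorentz_of_wsum_le (seq_add x y) _ _)). intros l Hl.
  assert (H : forall t, 0 < t -> wsum w (sq_seq (seq_add x y)) 0 l - A - B <= t * A + B / t).
  { intros t Ht.
    assert (wsum w (sq_seq (seq_add x y)) 0 l <=
            (1 + t) * wsum w (sq_seq x) 0 l + (1 + / t) * wsum w (sq_seq y) 0 l).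
    { rewrite <- wsum_lin. apply wsum_le; [apply w_nonincr|]. intros k _.
      apply sqr_plus_le_weighted; auto. }
    pose proof (wsum_le_lorentz_sq x l Hx Hl) as HxA. pose proof (wsum_le_lorentz_sq y l Hy Hl) as HyB.
    fold A B in HxA, HyB.
    assert (0 < / t) by (apply Rinv_0_lt_compat; auto).
    assert ((1 + t) * wsum w (sq_seq x) 0 l <= (1 + t) * A) by (apply Rmult_le_compat_l; lra).
    assert ((1 + / t) * wsum w (sq_seq y) 0 l <= (1 + / t) * B) by (apply Rmult_le_compat_l; lra).
    unfold Rdiv. lra. }
  pose proof (le_2_sqrt_mul_of_amgm A B _ HA HB H).
  unfold lorentz_norm. fold A B.
  pose proof (sqrt_sqrt A HA). pose proof (sqrt_sqrt B HB). nra.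
Qed.

Lemma lorentz_abs_le x y : lorentz w y -> (forall k, Rabs (x k) <= Rabs (y k)) ->
  lorentz w x /\ lorentz_sq w x <= lorentz_sq w y.
Proof.
  intros Hy H. apply lorentz_of_wsum_le. intros l Hl.
  eapply Rle_trans; [|apply (wsum_le_lorentz_sq y l Hy Hl)].
  apply wsum_le; [apply w_nonincr|]. intros k _. apply sqr_le_of_abs_le, H.
Qed.

Lemma lorentz_norm_le_of_abs_le x y : lorentz w y -> (forall k, Rabs (x k) <= Rabs (y k)) ->
  lorentz_norm w x <= lorentz_norm w y.
Proof. intros Hy H. apply sqrt_le_1_alt, (lorentz_abs_le x y Hy H). Qed.

Lemma mu_sqsum_le_lorentz_sq y n : lorentz w y -> mu_sqsum w y n <= lorentz_sq w y.
Proof.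
  intros Hy. pose proof (lorentz_bounded y Hy) as Hb.
  pose proof (lorentz_sq_nonneg y Hy) as Hs.
  assert (Hm : 0 <= mu_sqsum w y n).
  { apply psum_nonneg. intros i. apply Rmult_le_pos; [apply w_nonincr | apply Rle_0_sqr]. }
  apply Rnot_lt_le. intros Hlt.
  set (m := mu_sqsum w y n) in *. set (s := lorentz_sq w y) in *.
  set (d := (m - s) / (4 * m)).
  assert (Hd0 : 0 < d) by (apply Rdiv_lt_0_compat; lra).
  assert (Hd1 : d <= 1/4).
  { apply (Rmult_le_reg_r (4 * m)); [lra|]. unfold d, Rdiv. rewrite Rmult_assoc, Rinv_l by lra. lra. }
  destruct (mu_sqsum_approx w y (1 - d) w_nonincr Hb ltac:(lra) n) as [l [Hl [_ Hle]]].
  pose proof (wsum_le_lorentz_sq y l Hy Hl). fold m s in Hle, H.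
  assert (Hdm : 2 * d * m = (m - s) / 2) by (unfold d; field; lra).
  nra.
Qed.

Lemma lorentz_of_mu_le x y : bounded_seq x -> lorentz w y -> (forall n, mu x n <= mu y n) ->
  lorentz w x /\ lorentz_norm w x <= lorentz_norm w y.
Proof.
  intros Hb Hy H.
  assert (Hx : lorentz w x /\ lorentz_sq w x <= lorentz_sq w y).
  { apply lorentz_of_wsum_le. intros l Hl.
    eapply Rle_trans; [apply wsum_le_mu_sqsum; auto|].
    eapply Rle_trans; [|apply (mu_sqsum_le_lorentz_sq y (length l) Hy)].
    apply psum_le. intros i. apply Rmult_le_compat_l; [apply w_nonincr|].
    apply sqr_le_of_le_abs; [apply mu_nonneg; auto|].
    eapply Rle_trans; [apply H | apply Rle_abs]. }
  destruct Hx as [Hx Hle]. split; auto. apply sqrt_le_1_alt, Hle.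
Qed.

(* Fatou's lemma: finite partial sums pass to coordinatewise limits. *)
Lemma lorentz_norm_le_of_lim (v : nat -> rseq) x e n0 : 0 <= e ->
  (forall k, Un_cv (fun m => v m k) (x k)) ->
  (forall m, (n0 <= m)%nat -> lorentz w (v m) /\ lorentz_norm w (v m) <= e) ->
  lorentz w x /\ lorentz_norm w x <= e.
Proof.
  intros He Hx Hv.
  enough (Hsq : lorentz w x /\ lorentz_sq w x <= e * e)
    by (split; [apply Hsq | apply lorentz_norm_le_of_sq_le; [lra | apply Hsq]]).
  apply lorentz_of_wsum_le. intros l Hl.
  apply (Un_cv_le (fun m => wsum w (sq_seq (v m)) 0 l) _ _ n0).
  - apply (wsum_lim w (fun m => sq_seq (v m))). intros k. apply CV_mult; apply Hx.
  - intros m Hm. destruct (Hv m Hm) as [Hvm Hle].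
    pose proof (wsum_le_lorentz_sq _ l Hvm Hl). rewrite <- lorentz_norm_sqr in H by auto.
    pose proof (lorentz_norm_nonneg (v m)). nra.
Qed.

Lemma lorentz_cauchy_coord (u : nat -> rseq) k : (forall n, lorentz w (u n)) ->
  (forall eps, 0 < eps -> exists n0, forall m n, (n0 <= m)%nat -> (n0 <= n)%nat ->
     lorentz_norm w (seq_sub (u m) (u n)) < eps) ->
  Cauchy_crit (fun n => u n k).
Proof.
  intros Hu HC eps He.
  assert (Hs0 : 0 < sqrt (w 0%nat)) by (apply sqrt_lt_R0; auto).
  destruct (HC (eps * sqrt (w 0%nat))) as [n0 Hn0]; [nra|].
  exists n0. intros n m Hn Hm. unfold R_dist.
  pose proof (abs_coord_le_lorentz_norm _ k (lorentz_sub _ _ (Hu n) (Hu m))) as Hk.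
  unfold seq_sub in Hk at 1. specialize (Hn0 n m Hn Hm).
  assert (lorentz_norm w (seq_sub (u n) (u m)) / sqrt (w 0%nat) < eps).
  { apply (Rmult_lt_reg_r (sqrt (w 0%nat))); auto.
    unfold Rdiv. rewrite Rmult_assoc, Rinv_l by lra. lra. }
  lra.
Qed.

Lemma lorentz_complete (u : nat -> rseq) : (forall n, lorentz w (u n)) ->
  (forall eps, 0 < eps -> exists n0, forall m n, (n0 <= m)%nat -> (n0 <= n)%nat ->
     lorentz_norm w (seq_sub (u m) (u n)) < eps) ->
  exists x, lorentz w x /\
    forall eps, 0 < eps -> exists n0, forall n, (n0 <= n)%nat -> lorentz_norm w (seq_sub (u n) x) < eps.
Proof.
  intros Hu HC.
  destruct (choice (fun k l => Un_cv (fun n => u n k) l)) as [x Hx].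
  { intros k. destruct (Rcomplete.R_complete _ (lorentz_cauchy_coord u k Hu HC)) as [l Hl]. eauto. }
  assert (Key : forall eps, 0 < eps -> exists n0, forall n, (n0 <= n)%nat ->
            lorentz w (seq_sub (u n) x) /\ lorentz_norm w (seq_sub (u n) x) <= eps).
  { intros eps He. destruct (HC eps He) as [n0 Hn0]. exists n0. intros n Hn.
    apply (lorentz_norm_le_of_lim (fun m => seq_sub (u n) (u m)) _ eps n0); [lra| |].
    - intros k. apply CV_minus; [apply Un_cv_const | apply Hx].
    - intros m Hm. split; [apply lorentz_sub; auto | left; apply Hn0; auto]. }
  destruct (Key 1 ltac:(lra)) as [n1 Hn1]. destruct (Hn1 n1 (le_n _)) as [Hx1 _].
  exists x. split.
  - replace x with (seq_sub (u n1) (seq_sub (u n1) x)) by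
      (apply functional_extensionality; intros k; unfold seq_sub; ring).
    apply lorentz_sub; auto.
  - intros eps He. destruct (Key (eps / 2) ltac:(lra)) as [n0 Hn0]. exists n0. intros n Hn.
    destruct (Hn0 n Hn) as [_ Hle]. lra.
Qed.

End Lorentz.

Lemma lorentz_symmetric w : nonincr_weight w -> 0 < w 0%nat ->
  symmetric_seq_space (lorentz w) (lorentz_norm w).
Proof.
  intros Hw Hw0.
  split; [apply (lorentz_of_zero w); reflexivity|].
  split; [intros x y Hx Hy; apply lorentz_add; auto|].
  split; [intros a x Hx; apply lorentz_scal; auto|].
  split; [intros x Hx; apply (lorentz_bounded w); auto|].
  split; [intros x _; apply lorentz_norm_nonneg|].
  split; [intros x Hx H0; apply (lorentz_norm_eq0 w); auto|].
  split; [intros a x Hx; apply lorentz_norm_scal; auto|].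
  split; [intros x y Hx Hy; apply lorentz_norm_triangle; auto|].
  split; [apply lorentz_complete; auto|].
  intros x y Hb Hy H. apply lorentz_of_mu_le; auto.
Qed.

Definition unitv (n : nat) : rseq := fun k => if Nat.eqb k n then 1 else 0.

Fixpoint trunc (x : rseq) (n : nat) : rseq :=
  match n with O => seq_zero | S m => seq_add (trunc x m) (seq_scal (x m) (unitv m)) end.

Lemma trunc_val x n k : trunc x n k = if Nat.ltb k n then x k else 0.
Proof.
  induction n as [|n IH]; simpl.
  - unfold seq_zero. destruct (Nat.ltb_spec k 0); [lia | auto].
  - unfold seq_add, seq_scal, unitv. rewrite IH.
    destruct (Nat.ltb_spec k n), (Nat.ltb_spec k (S n)), (Nat.eqb_spec k n); subst; try lia; ring.
Qed.

Lemma tail_val x n k : seq_sub x (trunc x n) k = if Nat.ltb k n then 0 else x k.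
Proof. unfold seq_sub. rewrite trunc_val. destruct (Nat.ltb k n); ring. Qed.

Lemma abs_tail_le x n k : Rabs (seq_sub x (trunc x n) k) <= Rabs (x k).
Proof. rewrite tail_val. destruct (Nat.ltb k n); [rewrite Rabs_R0; apply Rabs_pos | lra]. Qed.

Lemma unitv_bounded n : bounded_seq (unitv n).
Proof.
  exists 1. intros k. unfold unitv. destruct (Nat.eqb k n); rewrite ?Rabs_R1, ?Rabs_R0; lra.
Qed.

Section DivergentWeight.

Variable w : nat -> R.
Hypothesis w_nonincr : nonincr_weight w.

Lemma lorentz_unitv n : lorentz w (unitv n).
Proof.
  exists (w 0%nat). intros l Hl.
  enough (H : forall off, wsum w (sq_seq (unitv n)) off l <= w off)
    by (apply H).
  induction Hl as [|k l Hk Hl IH]; intros off; simpl; [apply w_nonincr|].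
  unfold sq_seq at 1, unitv at 1 2. destruct (Nat.eqb_spec k n) as [->|h].
  - rewrite wsum_eq0; [lra|]. intros j Hj. unfold sq_seq, unitv.
    destruct (Nat.eqb_spec j n); [subst; tauto | ring].
  - specialize (IH (S off)). pose proof (proj2 w_nonincr off). lra.
Qed.

Lemma lorentz_trunc x n : lorentz w (trunc x n).
Proof.
  induction n as [|n IH]; simpl.
  - apply (lorentz_of_zero w). reflexivity.
  - apply lorentz_add; auto. apply lorentz_scal, lorentz_unitv.
Qed.

Lemma lorentz_tail x n : lorentz w x -> lorentz w (seq_sub x (trunc x n)).
Proof. intros Hx. apply lorentz_sub; auto. apply lorentz_trunc. Qed.

Lemma lorentz_norm_tail_le x n : lorentz w x -> lorentz_norm w (seq_sub x (trunc x n)) <= lorentz_norm w x.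
Proof. intros Hx. apply lorentz_norm_le_of_abs_le; auto. intros k. apply abs_tail_le. Qed.

Hypothesis w_divergent : divergent w.

(* A coordinate bounded below infinitely often forces [psum w] to stay bounded. *)
Lemma lorentz_c0 y : lorentz w y -> c0_seq y.
Proof.
  intros Hy. apply NNPP. intros Hc.
  destruct (not_c0_large_lists y Hc) as [eta [He Hl]].
  destruct (w_divergent (lorentz_sq w y / (eta * eta))) as [n Hn].
  destruct (Hl n) as [l [Hnd [Hlen Hk]]].
  assert (Hee : 0 < eta * eta) by nra.
  assert (eta * eta * psum w n <= wsum w (sq_seq y) 0 l).
  { rewrite <- Hlen. apply const_le_wsum; [apply w_nonincr|].
    intros k Hkl. apply sqr_le_of_le_abs; [lra | auto]. }
  pose proof (wsum_le_lorentz_sq w y l Hy Hnd).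
  apply (Rmult_lt_compat_l (eta * eta)) in Hn; auto.
  replace (eta * eta * (lorentz_sq w y / (eta * eta))) with (lorentz_sq w y) in Hn by (field; lra).
  lra.
Qed.

Lemma wsum_disjoint_le y l0 l : lorentz w y -> NoDup l0 -> NoDup l ->
  (forall k, In k l -> ~ In k l0) ->
  wsum w (sq_seq y) (length l0) l <= lorentz_sq w y - wsum w (sq_seq y) 0 l0.
Proof.
  intros Hy H0 Hl Hdisj.
  assert (Hnd : NoDup (l0 ++ l)) by (apply NoDup_app; auto; intros a Ha Ha'; exact (Hdisj a Ha' Ha)).
  pose proof (wsum_le_lorentz_sq w y _ Hy Hnd) as H. rewrite wsum_app in H. simpl in H. lra.
Qed.

(* Beyond [n] all entries are below [eta]; at most [length l0] of them carry the first
   weights, and the others collect at most what [l0] leaves of the supremum. *)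
Lemma lorentz_tail_sq_le y l0 n eta : lorentz w y -> NoDup l0 -> (list_max l0 < n)%nat ->
  (forall k, (n <= k)%nat -> sq_seq y k <= eta) ->
  lorentz_sq w (seq_sub y (trunc y n)) <=
    eta * psum w (length l0) + (lorentz_sq w y - wsum w (sq_seq y) 0 l0).
Proof.
  intros Hy Hl0 Hn Hsmall. set (t := seq_sub y (trunc y n)). set (m := length l0).
  refine (proj2 (lorentz_of_wsum_le w t _ _)). intros l Hl.
  set (l' := filter (fun k => Nat.leb n k) l).
  assert (Hl'nd : NoDup l') by (apply NoDup_filter; auto).
  assert (Hl'in : forall k, In k l' -> (n <= k)%nat).
  { intros k Hk. apply filter_In in Hk as [_ Hk]. apply Nat.leb_le; auto. }
  assert (Hty : forall k, In k l' -> sq_seq t k = sq_seq y k).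
  { intros k Hk. unfold sq_seq, t. rewrite tail_val. specialize (Hl'in k Hk).
    destruct (Nat.ltb_spec k n); [lia | reflexivity]. }
  assert (Hfilter : wsum w (sq_seq t) 0 l <= wsum w (sq_seq t) 0 l').
  { apply wsum_le_filter; [auto | apply sq_seq_nonneg|]. intros k _ Hk. unfold sq_seq, t.
    rewrite tail_val. apply Nat.leb_gt in Hk. destruct (Nat.ltb_spec k n); [ring | lia]. }
  assert (Hin : forall k, In k (firstn m l') \/ In k (skipn m l') -> In k l')
    by (intros k Hk; rewrite <- (firstn_skipn m l'); apply in_or_app; auto).
  assert (Hfirst : wsum w (sq_seq t) 0 (firstn m l') <= eta * psum w m).
  { eapply Rle_trans; [apply (wsum_le_const w _ _ eta); [apply w_nonincr|]|].
    - intros k Hk. rewrite Hty by auto. apply Hsmall, Hl'in; auto.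
    - assert (0 <= eta) by (eapply Rle_trans; [apply (sq_seq_nonneg y n) | apply Hsmall; lia]).
      apply Rmult_le_compat_l; [auto|].
      apply psum_le_psum_of_le; [apply w_nonincr | rewrite length_firstn; lia]. }
  assert (Hrest : wsum w (sq_seq t) (length (firstn m l')) (skipn m l') <=
                  lorentz_sq w y - wsum w (sq_seq y) 0 l0).
  { destruct (Nat.le_gt_cases (length l') m) as [hlen|hlen].
    - rewrite skipn_all2 by lia. simpl.
      pose proof (wsum_le_lorentz_sq w y l0 Hy Hl0). lra.
    - rewrite length_firstn, Nat.min_l by lia.
      rewrite (wsum_ext w _ (sq_seq y)) by auto.
      apply wsum_disjoint_le; auto.
      + apply (NoDup_app_remove_l (firstn m l')). rewrite firstn_skipn. auto.
      + intros k Hk Hk0. apply le_list_max in Hk0. specialize (Hl'in k (Hin k (or_intror Hk))). lia. }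
  rewrite <- (firstn_skipn m l'), wsum_app, Nat.add_0_l in Hfilter. lra.
Qed.

Lemma lorentz_tail_small y eps : lorentz w y -> 0 < eps ->
  exists M, forall n, (M <= n)%nat -> lorentz_norm w (seq_sub y (trunc y n)) <= eps.
Proof.
  intros Hy He. set (e := eps * eps / 2).
  assert (Hepos : 0 < e) by (unfold e; nra).
  destruct (lorentz_sq_approx w y e Hy Hepos) as [l0 [Hl0 Hl0v]].
  pose proof (psum_nonneg w (length l0) (proj1 w_nonincr)) as HW.
  set (eta := e / (psum w (length l0) + 1)).
  assert (Heta : 0 < eta) by (apply Rdiv_lt_0_compat; lra).
  assert (Heta2 : eta * psum w (length l0) <= e).
  { apply (Rmult_le_reg_r (psum w (length l0) + 1)); [lra|].
    replace (eta * psum w (length l0) * (psum w (length l0) + 1)) with (e * psum w (length l0))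
      by (unfold eta; field; lra).
    apply Rmult_le_compat_l; lra. }
  destruct (lorentz_c0 y Hy (Rmin 1 eta) ltac:(apply Rmin_glb_lt; lra)) as [N HN].
  exists (Nat.max N (S (list_max l0))). intros n Hn.
  apply lorentz_norm_le_of_sq_le; [lra|].
  eapply Rle_trans; [apply (lorentz_tail_sq_le y l0 n eta); auto; [lia|]|].
  - intros k Hk. specialize (HN k ltac:(lia)). unfold sq_seq. rewrite <- Rabs_mult_self.
    pose proof (Rabs_pos (y k)). pose proof (Rmin_l 1 eta). pose proof (Rmin_r 1 eta). nra.
  - assert (e + e = eps * eps) by (unfold e; field). lra.
Qed.

End DivergentWeight.

(** * Reflexivity of d(w,2) *)

Lemma dual_elem_add E N f g : dual_elem E N f -> dual_elem E N g ->
  dual_elem E N (fun x => f x + g x).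
Proof.
  intros [fa [fs [K HK]]] [ga [gs [K' HK']]].
  split; [intros x y Hx Hy; rewrite fa, ga by auto; ring|].
  split; [intros a x Hx; rewrite fs, gs by auto; ring|].
  exists (K + K'). intros x Hx. eapply Rle_trans; [apply Rabs_triang|].
  specialize (HK x Hx). specialize (HK' x Hx). lra.
Qed.

Lemma dual_elem_scal E N a f : dual_elem E N f -> dual_elem E N (fun x => a * f x).
Proof.
  intros [fa [fs [K HK]]].
  split; [intros x y Hx Hy; rewrite fa by auto; ring|].
  split; [intros b x Hx; rewrite fs by auto; ring|].
  exists (Rabs a * K). intros x Hx. rewrite Rabs_mult, Rmult_assoc.
  apply Rmult_le_compat_l; [apply Rabs_pos | auto].
Qed.

Lemma dual_elem_zero E N f x : dual_elem E N f -> E x -> (forall k, x k = 0) -> f x = 0.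
Proof.
  intros [_ [fs _]] Hx H0.
  replace x with (seq_scal 0 x) by (apply functional_extensionality; intros k; unfold seq_scal; rewrite H0; ring).
  rewrite fs by auto. ring.
Qed.

Fixpoint lcomb (cs : list (R * nat)) (x : rseq) : R :=
  match cs with nil => 0 | (a, k) :: cs' => a * x k + lcomb cs' x end.

Fixpoint coord_coeffs (f : rseq -> R) (n : nat) : list (R * nat) :=
  match n with O => nil | S m => (f (unitv m), m) :: coord_coeffs f m end.

Fixpoint wsum_coeffs (w c : nat -> R) (off : nat) (l : list nat) : list (R * nat) :=
  match l with nil => nil | k :: l' => (w off * c k, k) :: wsum_coeffs w c (S off) l' end.

Lemma lcomb_add cs x y : lcomb cs (seq_add x y) = lcomb cs x + lcomb cs y.
Proof. induction cs as [|[a k] cs IH]; simpl; [|rewrite IH; unfold seq_add]; ring. Qed.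

Lemma lcomb_scal cs a x : lcomb cs (seq_scal a x) = a * lcomb cs x.
Proof. induction cs as [|[b k] cs IH]; simpl; [|rewrite IH; unfold seq_scal]; ring. Qed.

Lemma lcomb_wsum_coeffs w c off l x : lcomb (wsum_coeffs w c off l) x = wsum w (fun k => c k * x k) off l.
Proof. revert off; induction l as [|k l IH]; intros off; simpl; [reflexivity | rewrite IH; ring]. Qed.

Definition vanishes_below (n : nat) (x : rseq) := forall k, (k < n)%nat -> x k = 0.
Definition vanishes_from (n : nat) (x : rseq) := forall k, (n <= k)%nat -> x k = 0.

Section Reflexive.

Variable w : nat -> R.
Hypothesis w_nonincr : nonincr_weight w.
Hypothesis w0_pos : 0 < w 0%nat.

Notation dual := (dual_elem (lorentz w) (lorentz_norm w)).
Notation bidual := (bidual_elem (lorentz w) (lorentz_norm w)).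

Lemma dual_coord k : dual (fun x => x k).
Proof.
  split; [reflexivity|]. split; [reflexivity|].
  exists (/ sqrt (w 0%nat)). intros x Hx. rewrite Rmult_comm. apply abs_coord_le_lorentz_norm; auto.
Qed.

Lemma dual_lcomb cs : dual (lcomb cs).
Proof.
  induction cs as [|[a k] cs IH].
  - split; [intros; simpl; ring|]. split; [intros; simpl; ring|].
    exists 0. intros x _. simpl. rewrite Rabs_R0. lra.
  - exact (dual_elem_add _ _ _ _ (dual_elem_scal _ _ a _ (dual_coord k)) IH).
Qed.

Lemma dual_sub f x y : dual f -> lorentz w x -> lorentz w y -> f (seq_sub x y) = f x - f y.
Proof.
  intros [fa [fs _]] Hx Hy. rewrite seq_sub_add_opp, fa, fs; auto; [ring|].
  apply lorentz_scal; auto.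
Qed.

Lemma dual_trunc f x n : dual f -> f (trunc x n) = lcomb (coord_coeffs f n) x.
Proof.
  intros Hf. pose proof Hf as [fa [fs _]]. induction n as [|n IH]; simpl.
  - apply (dual_elem_zero _ _ f seq_zero Hf); [apply (lorentz_of_zero w) |]; reflexivity.
  - rewrite fa, fs, IH; try ring; auto using lorentz_unitv, lorentz_trunc, lorentz_scal.
Qed.

Lemma bidual_lcomb Phi cs : bidual Phi -> Phi (lcomb cs) = lcomb cs (fun k => Phi (fun x => x k)).
Proof.
  intros [Hadd [Hsc _]]. induction cs as [|[a k] cs IH].
  - assert (H0 : lcomb nil = fun x => 0 * lcomb nil x)
      by (apply functional_extensionality; intros; simpl; ring).
    change (lcomb nil (fun k => Phi (fun x => x k))) with 0.
    rewrite H0, Hsc by apply dual_lcomb. ring.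
  - change (lcomb ((a, k) :: cs)) with (fun x => (fun x => a * x k) x + lcomb cs x).
    rewrite Hadd, Hsc, IH; [reflexivity | apply dual_coord | | apply dual_lcomb].
    apply dual_elem_scal, dual_coord.
Qed.

Lemma wsum_mul_le y x l : lorentz w x -> NoDup l ->
  Rabs (wsum w (fun k => y k * x k) 0 l) <= sqrt (wsum w (sq_seq y) 0 l) * lorentz_norm w x.
Proof.
  intros Hx Hl.
  set (P := wsum w (sq_seq y) 0 l). set (Q := wsum w (sq_seq x) 0 l).
  assert (HP : 0 <= P) by (apply wsum_nonneg; [apply w_nonincr | apply sq_seq_nonneg]).
  assert (HQ : 0 <= Q) by (apply wsum_nonneg; [apply w_nonincr | apply sq_seq_nonneg]).
  assert (H : forall t, 0 < t -> 2 * Rabs (wsum w (fun k => y k * x k) 0 l) <= t * P + Q / t).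
  { intros t Ht. eapply Rle_trans; [apply Rmult_le_compat_l; [lra | apply wsum_abs, w_nonincr]|].
    rewrite <- wsum_scal. unfold P, Q, Rdiv. rewrite (Rmult_comm _ (/ t)), <- wsum_lin.
    apply wsum_le; [apply w_nonincr|]. intros k _. apply twice_abs_mul_le; auto. }
  pose proof (le_2_sqrt_mul_of_amgm P Q _ HP HQ H).
  assert (sqrt Q <= lorentz_norm w x) by (apply sqrt_le_1_alt, wsum_le_lorentz_sq; auto).
  pose proof (sqrt_pos P).
  assert (sqrt P * sqrt Q <= sqrt P * lorentz_norm w x) by (apply Rmult_le_compat_l; auto).
  lra.
Qed.

(* Testing [Phi] on [x |-> sum_j w_j y_(l_j) x_(l_j)], whose dual norm is at most
   the Lorentz norm of [y] on [l], bounds that norm by the norm of [Phi]. *)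
Lemma bidual_coords_lorentz Phi : bidual Phi -> lorentz w (fun k => Phi (fun x => x k)).
Proof.
  intros HPhi. set (y := fun k => Phi (fun x => x k)).
  pose proof HPhi as [_ [_ [C HC]]].
  exists (C * C). intros l Hl.
  set (P := wsum w (sq_seq y) 0 l).
  assert (HP : 0 <= P) by (apply wsum_nonneg; [apply w_nonincr | apply sq_seq_nonneg]).
  assert (Hval : Phi (lcomb (wsum_coeffs w y 0 l)) = P).
  { rewrite bidual_lcomb, lcomb_wsum_coeffs by auto. reflexivity. }
  assert (Hb : Rabs (Phi (lcomb (wsum_coeffs w y 0 l))) <= C * sqrt P).
  { apply HC; [apply dual_lcomb|]. intros x Hx. rewrite lcomb_wsum_coeffs. apply wsum_mul_le; auto. }
  rewrite Hval, Rabs_pos_eq in Hb by auto.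
  pose proof (sqrt_pos P). pose proof (sqrt_sqrt P HP). fold P. nra.
Qed.

Hypothesis w_divergent : divergent w.

Lemma dual_normalize f eps x : dual f -> lorentz w x -> eps * lorentz_norm w x < Rabs (f x) ->
  exists c, lorentz_norm w (seq_scal c x) = 1 /\ eps < Rabs (f (seq_scal c x)).
Proof.
  intros Hf Hx Hlt. pose proof Hf as [_ [fs _]].
  pose proof (lorentz_norm_nonneg w x) as Hn0.
  assert (Hpos : 0 < lorentz_norm w x).
  { destruct (Req_dec (lorentz_norm w x) 0) as [h|h]; [|lra]. exfalso.
    rewrite (dual_elem_zero _ _ f x Hf Hx (lorentz_norm_eq0 w w0_pos x Hx h)), h, Rabs_R0 in Hlt. lra. }
  assert (Hc : 0 < / lorentz_norm w x) by (apply Rinv_0_lt_compat; auto).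
  exists (/ lorentz_norm w x). split.
  - rewrite lorentz_norm_scal, Rabs_pos_eq by (auto; lra). field. lra.
  - rewrite fs, Rabs_mult, Rabs_pos_eq by (auto; lra).
    apply (Rmult_lt_reg_l (lorentz_norm w x)); auto. rewrite <- Rmult_assoc, Rinv_r by lra. lra.
Qed.

(* Truncating far out keeps [f] large, since the tail has small norm. *)
Lemma dual_block f eps n x1 : dual f -> lorentz w x1 -> vanishes_below n x1 ->
  lorentz_norm w x1 = 1 -> eps < Rabs (f x1) ->
  exists b, lorentz w b /\ vanishes_below n b /\ (exists m, vanishes_from m b) /\
    lorentz_sq w b <= 1 /\ eps < f b.
Proof.
  intros Hf Hx1 Hz HN1 Hf1. pose proof Hf as [fa [fs [K HK]]].
  set (d := (Rabs (f x1) - eps) / (2 * (Rabs K + 1))).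
  pose proof (Rabs_pos K) as HK0.
  assert (Hd0 : 0 < d) by (apply Rdiv_lt_0_compat; lra).
  destruct (lorentz_tail_small w w_nonincr w_divergent x1 d Hx1 Hd0) as [M0 HM0].
  set (m := Nat.max M0 n). set (b0 := trunc x1 m).
  assert (Hb0 : lorentz w b0) by apply lorentz_trunc, w_nonincr.
  assert (Hft : Rabs (f (seq_sub x1 b0)) <= Rabs K * d).
  { eapply Rle_trans; [apply HK, lorentz_tail; auto|].
    eapply Rle_trans; [apply Rmult_le_compat_r; [apply lorentz_norm_nonneg | apply Rle_abs]|].
    apply Rmult_le_compat_l; [auto | apply HM0; lia]. }
  rewrite dual_sub in Hft by auto.
  assert (HKd : Rabs K * d < Rabs (f x1) - eps).
  { apply (Rmult_lt_reg_r (2 * (Rabs K + 1))); [lra|].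
    replace (Rabs K * d * (2 * (Rabs K + 1))) with (Rabs K * (Rabs (f x1) - eps)) by (unfold d; field; lra).
    nra. }
  assert (Hfb0 : eps < Rabs (f b0)) by (pose proof (Rabs_triang_inv (f x1) (f b0)); lra).
  assert (Hz0 : vanishes_below n b0).
  { intros k Hk. unfold b0. rewrite trunc_val, Hz by auto. destruct (Nat.ltb k m); reflexivity. }
  assert (Hz1 : vanishes_from m b0).
  { intros k Hk. unfold b0. rewrite trunc_val. destruct (Nat.ltb_spec k m); [lia | reflexivity]. }
  assert (Hsqb0 : lorentz_sq w b0 <= 1).
  { replace 1 with (lorentz_sq w x1) by (rewrite <- lorentz_norm_sqr, HN1 by auto; ring).
    apply (lorentz_abs_le w w_nonincr b0 x1 Hx1). intros k. unfold b0. rewrite trunc_val.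
    destruct (Nat.ltb k m); [lra | rewrite Rabs_R0; apply Rabs_pos]. }
  destruct (Rle_or_lt 0 (f b0)) as [hs|hs].
  - exists b0. rewrite Rabs_pos_eq in Hfb0 by auto. repeat split; eauto.
  - exists (seq_scal (-1) b0). rewrite Rabs_left in Hfb0 by auto.
    split; [apply lorentz_scal; auto|].
    split; [intros k Hk; unfold seq_scal; rewrite Hz0 by auto; ring|].
    split; [exists m; intros k Hk; unfold seq_scal; rewrite Hz1 by auto; ring|].
    split; [rewrite lorentz_sq_scal by auto; lra|].
    rewrite fs by auto. lra.
Qed.

(* Blocks with disjoint supports add up in [lorentz_sq], while [f] adds up linearly. *)
Lemma dual_sum_blocks f eps : dual f ->
  (forall n, exists b, lorentz w b /\ vanishes_below n b /\ (exists m, vanishes_from m b) /\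
     lorentz_sq w b <= 1 /\ eps < f b) ->
  forall m : nat, exists z, lorentz w z /\ (exists n, vanishes_from n z) /\
    lorentz_sq w z <= INR m /\ INR m * eps <= f z.
Proof.
  intros Hf Hblock m. pose proof Hf as [fa _]. induction m as [|m IH].
  - destruct (lorentz_of_zero w seq_zero) as [Hz Hsq]; [reflexivity|].
    exists seq_zero. split; [auto|]. split; [exists 0%nat; intros k _; reflexivity|].
    rewrite (dual_elem_zero _ _ f seq_zero Hf Hz) by reflexivity. simpl. lra.
  - destruct IH as [z [Hz [[n Hn] [Hsqz Hfz]]]].
    destruct (Hblock n) as [b [Hb [Hb1 [[M HM] [Hsqb Hfb]]]]].
    exists (seq_add z b). split; [apply lorentz_add; auto|].
    split; [exists (Nat.max n M); intros k Hk; unfold seq_add; rewrite Hn, HM by lia; ring|].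
    rewrite S_INR, fa by auto. split; [|lra].
    refine (proj2 (lorentz_of_wsum_le w (seq_add z b) (INR m + 1) _)). intros l Hl.
    replace (wsum w (sq_seq (seq_add z b)) 0 l) with (wsum w (fun k => 1 * sq_seq z k + 1 * sq_seq b k) 0 l).
    + rewrite wsum_lin. pose proof (wsum_le_lorentz_sq w z l Hz Hl).
      pose proof (wsum_le_lorentz_sq w b l Hb Hl). lra.
    + apply wsum_ext. intros k _. unfold sq_seq, seq_add.
      destruct (Nat.lt_ge_cases k n) as [h|h]; [rewrite Hb1 | rewrite Hn]; auto; ring.
Qed.

(* [f z >= m eps] and [lorentz_norm w z <= sqrt m] contradict [|f z| <= K ||z||] for large [m]. *)
Lemma not_dual_linear_growth f eps : dual f -> 0 < eps ->
  ~ forall m : nat, exists z, lorentz w z /\ lorentz_sq w z <= INR m /\ INR m * eps <= f z.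
Proof.
  intros Hf He Hgrow. pose proof Hf as [_ [_ [K HK]]]. pose proof (Rabs_pos K) as HK0.
  destruct (INR_unbounded ((Rabs K + 1) * (Rabs K + 1) / (eps * eps))) as [m Hm].
  destruct (Hgrow m) as [z [Hz [Hsqz Hfz]]].
  assert (Hee : 0 < eps * eps) by nra.
  assert (Hm' : (Rabs K + 1) * (Rabs K + 1) < INR m * (eps * eps)).
  { apply (Rmult_lt_compat_r (eps * eps)) in Hm; auto.
    unfold Rdiv in Hm. rewrite Rmult_assoc, Rinv_l in Hm by lra. lra. }
  assert (Hfz2 : f z <= Rabs K * lorentz_norm w z).
  { eapply Rle_trans; [apply Rle_abs|]. eapply Rle_trans; [apply HK; auto|].
    apply Rmult_le_compat_r; [apply lorentz_norm_nonneg | apply Rle_abs]. }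
  assert (HNz : lorentz_norm w z <= sqrt (INR m)) by (apply sqrt_le_1_alt; auto).
  pose proof (sqrt_sqrt (INR m) (pos_INR m)) as Hsm. pose proof (sqrt_pos (INR m)) as Hsp.
  set (s := sqrt (INR m)) in *.
  assert (Hc : s * s * eps <= Rabs K * s).
  { rewrite Hsm. eapply Rle_trans; [apply Hfz|]. eapply Rle_trans; [apply Hfz2|].
    apply Rmult_le_compat_l; auto. }
  assert (Hs0 : 0 < s) by (destruct (Req_dec s 0) as [h|h]; [rewrite h in Hsm; nra | lra]).
  assert (s * eps <= Rabs K) by (apply (Rmult_le_reg_l s); auto; lra).
  assert (s * eps * (s * eps) <= (Rabs K + 1) * (Rabs K + 1)) by (apply Rmult_le_compat; nra).
  replace (s * eps * (s * eps)) with (s * s * (eps * eps)) in H0 by ring. rewrite Hsm in H0. lra.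
Qed.

Lemma dual_tail_small f eps : dual f -> 0 < eps ->
  exists n, forall x, lorentz w x -> vanishes_below n x -> Rabs (f x) <= eps * lorentz_norm w x.
Proof.
  intros Hf He. apply NNPP. intros Hno. apply (not_dual_linear_growth f eps Hf He).
  intros m. destruct (dual_sum_blocks f eps Hf) with (m := m) as [z [Hz [_ Hzm]]]; eauto.
  intros n. apply not_ex_all_not with (n := n) in Hno.
  apply not_all_ex_not in Hno as [x Hx].
  apply imply_to_and in Hx as [Hx Hx']. apply imply_to_and in Hx' as [Hz Hlt].
  apply Rnot_le_lt in Hlt. destruct (dual_normalize f eps x Hf Hx Hlt) as [c [Hc1 Hc2]].
  apply (dual_block f eps n (seq_scal c x)); auto; [apply lorentz_scal; auto|].
  intros k Hk. unfold seq_scal. rewrite Hz by auto. ring.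
Qed.

Lemma dual_near_coords f eps : dual f -> 0 < eps -> exists n, forall x, lorentz w x ->
  Rabs (f x - lcomb (coord_coeffs f n) x) <= eps * lorentz_norm w x.
Proof.
  intros Hf He. destruct (dual_tail_small f eps Hf He) as [n Hn]. exists n. intros x Hx.
  rewrite <- dual_trunc, <- dual_sub by (auto; apply lorentz_trunc; auto).
  eapply Rle_trans; [apply Hn; [apply lorentz_tail; auto|]|].
  - intros k Hk. rewrite tail_val. destruct (Nat.ltb_spec k n); [reflexivity | lia].
  - apply Rmult_le_compat_l; [lra | apply lorentz_norm_tail_le; auto].
Qed.

Lemma lorentz_reflexive : reflexive (lorentz w) (lorentz_norm w).
Proof.
  intros Phi HPhi. set (y := fun k => Phi (fun x => x k)).
  assert (Hy : lorentz w y) by (apply bidual_coords_lorentz; auto).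
  exists y. split; auto. intros f Hf.
  pose proof HPhi as [Padd [Psc [C HC]]]. pose proof Hf as [fa [fs _]].
  apply Rminus_diag_uniq, (eq_0_of_abs_le_mul_eps _ (Rabs C + lorentz_norm w y)).
  { pose proof (Rabs_pos C). pose proof (lorentz_norm_nonneg w y). lra. }
  intros eps He. destruct (dual_near_coords f eps Hf He) as [n Hn].
  set (cs := coord_coeffs f n). set (h := fun x => f x - lcomb cs x).
  assert (Hh : dual h).
  { split; [intros x1 x2 H1 H2; unfold h; rewrite fa, lcomb_add by auto; ring|]. 
    split; [intros a x Hx; unfold h; rewrite fs, lcomb_scal by auto; ring|].
    exists eps. exact Hn. }
  assert (HPh : Rabs (Phi h) <= C * eps) by (apply HC; [exact Hh | exact Hn]).
  assert (HPf : Phi f = Phi h + lcomb cs y).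
  { replace f with (fun x => h x + lcomb cs x) at 1
      by (apply functional_extensionality; intros x; unfold h; ring).
    rewrite Padd, bidual_lcomb by (auto; apply dual_lcomb). reflexivity. }
  specialize (Hn y Hy). fold cs in Hn.
  rewrite HPf. replace (Phi h + lcomb cs y - f y) with (Phi h - (f y - lcomb cs y)) by ring.
  eapply Rle_trans; [apply Rabs_triang|]. rewrite Rabs_Ropp.
  assert (C * eps <= Rabs C * eps) by (apply Rmult_le_compat_r; [lra | apply Rle_abs]).
  lra.
Qed.

End Reflexive.

(** * A divergent weight summing a null sequence *)

Section BlockWeight.

Variable b : nat -> R.
Hypothesis b_pos : forall i, 0 < b i.
Hypothesis b_nonincr : forall i, b (S i) <= b i.
Variable tau : nat -> nat.
Hypothesis b_tau : forall j, b (tau j) <= b 0%nat * (/ 2) ^ j.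

(* The weight is [/ block_len j] on the [j]-th block of [block_len j] consecutive indices:
   each block adds [1] to [psum w], and the blocks are long enough that block [j]
   starts after [tau j], where [b <= b 0 * 2^-j]. *)
Fixpoint block_len (j : nat) : nat :=
  match j with O => S (tau 1) | S j' => S (Nat.max (block_len j') (tau (S (S j')))) end.

(* [block_pos i = (j, r)]: index [i] is entry number [r] of block [j]. *)
Fixpoint block_pos (i : nat) : nat * nat :=
  match i with
  | O => (0%nat, 0%nat)
  | S i' => let (j, r) := block_pos i' in
            if Nat.ltb (S r) (block_len j) then (j, S r) else (S j, 0%nat)
  end.

Definition block_weight (i : nat) : R := / INR (block_len (fst (block_pos i))).

Lemma tau_lt_block_len j : (tau (S j) < block_len j)%nat.
Proof. destruct j; simpl; lia. Qed.

Lemma block_len_mono j j' : (j <= j')%nat -> (block_len j <= block_len j')%nat.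
Proof. intros H. induction H; simpl; lia. Qed.

Lemma block_len_pos j : 0 < INR (block_len j).
Proof. apply lt_0_INR. destruct j; simpl; lia. Qed.

Lemma b_antitone i j : (i <= j)%nat -> b j <= b i.
Proof. intros H. induction H as [|m _ IH]; [lra | specialize (b_nonincr m); lra]. Qed.

Lemma block_pos_S i j r : block_pos i = (j, r) ->
  block_pos (S i) = if Nat.ltb (S r) (block_len j) then (j, S r) else (S j, 0%nat).
Proof. intros H. simpl. rewrite H. reflexivity. Qed.

Lemma block_weight_of_pos i j r : block_pos i = (j, r) -> block_weight i = / INR (block_len j).
Proof. intros H. unfold block_weight. rewrite H. reflexivity. Qed.

Lemma block_pos_bounds i j r : block_pos i = (j, r) -> (r < block_len j)%nat /\ (r <= i)%nat.
Proof.
  revert j r. induction i as [|i IH]; intros j r H.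
  - injection H as <- <-. simpl. lia.
  - destruct (block_pos i) as [j' r'] eqn:E. specialize (IH j' r' eq_refl).
    rewrite (block_pos_S i j' r' E) in H.
    destruct (Nat.ltb_spec (S r') (block_len j')); injection H as <- <-; [lia|].
    simpl. lia.
Qed.

Lemma b_le_on_block i j r : block_pos i = (j, r) -> b i <= b 0%nat * (/ 2) ^ j.
Proof.
  revert j r. induction i as [|i IH]; intros j r H.
  - injection H as <- <-. simpl. lra.
  - destruct (block_pos i) as [j' r'] eqn:E. specialize (IH j' r' eq_refl).
    pose proof (block_pos_bounds i j' r' E) as [Hr Hri].
    rewrite (block_pos_S i j' r' E) in H.
    destruct (Nat.ltb_spec (S r') (block_len j')); injection H as <- <-.
    + specialize (b_nonincr i). lra.
    + pose proof (tau_lt_block_len j').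
      pose proof (b_antitone (tau (S j')) (S i) ltac:(lia)). specialize (b_tau (S j')). lra.
Qed.

Lemma psum_block_weight i j r : block_pos i = (j, r) ->
  psum block_weight i = INR j + INR r / INR (block_len j).
Proof.
  revert j r. induction i as [|i IH]; intros j r H.
  - injection H as <- <-. simpl. unfold Rdiv. ring.
  - destruct (block_pos i) as [j' r'] eqn:E. specialize (IH j' r' eq_refl).
    pose proof (block_pos_bounds i j' r' E) as [Hr _]. pose proof (block_len_pos j').
    simpl psum. rewrite IH, (block_weight_of_pos i j' r' E).
    rewrite (block_pos_S i j' r' E) in H.
    destruct (Nat.ltb_spec (S r') (block_len j')); injection H as <- <-.
    + rewrite S_INR. field. lra.
    + replace (INR r') with (INR (block_len j') - 1)
        by (replace (block_len j') with (S r') by lia; rewrite S_INR; ring).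
      pose proof (block_len_pos (S j')). rewrite INR_0, (S_INR j'). field. lra.
Qed.

Lemma psum_block_weight_b i j r : block_pos i = (j, r) ->
  psum (fun i => block_weight i * b i) i <=
  b 0%nat * (2 - 2 * (/ 2) ^ j + (/ 2) ^ j * (INR r / INR (block_len j))).
Proof.
  revert j r. induction i as [|i IH]; intros j r H.
  - injection H as <- <-. simpl. specialize (b_pos 0%nat). unfold Rdiv. nra.
  - destruct (block_pos i) as [j' r'] eqn:E. specialize (IH j' r' eq_refl).
    pose proof (block_pos_bounds i j' r' E) as [Hr _]. pose proof (block_len_pos j').
    pose proof (b_le_on_block i j' r' E) as Hbi.
    assert (Hwb : block_weight i * b i <= / INR (block_len j') * (b 0%nat * (/ 2) ^ j')).
    { rewrite (block_weight_of_pos i j' r' E).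
      apply Rmult_le_compat_l; [left; apply Rinv_0_lt_compat|]; auto. }
    simpl psum. rewrite (block_pos_S i j' r' E) in H.
    destruct (Nat.ltb_spec (S r') (block_len j')); injection H as <- <-.
    + rewrite S_INR.
      replace (b 0%nat * (2 - 2 * (/ 2) ^ j' + (/ 2) ^ j' * ((INR r' + 1) / INR (block_len j'))))
        with (b 0%nat * (2 - 2 * (/ 2) ^ j' + (/ 2) ^ j' * (INR r' / INR (block_len j')))
              + / INR (block_len j') * (b 0%nat * (/ 2) ^ j')) by (field; lra).
      lra.
    + replace (INR r') with (INR (block_len j') - 1) in IH
        by (replace (block_len j') with (S r') by lia; rewrite S_INR; ring).
      replace (b 0%nat * (2 - 2 * (/ 2) ^ S j' + (/ 2) ^ S j' * (INR 0 / INR (block_len (S j')))))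
        with (b 0%nat * (2 - 2 * (/ 2) ^ j' + (/ 2) ^ j' * ((INR (block_len j') - 1) / INR (block_len j')))
              + / INR (block_len j') * (b 0%nat * (/ 2) ^ j'))
        by (rewrite INR_0; cbn [pow]; pose proof (block_len_pos (S j')); field; lra).
      lra.
Qed.

Lemma block_weight_nonincr : nonincr_weight block_weight.
Proof.
  split; [intros i; left; apply Rinv_0_lt_compat, block_len_pos|].
  intros i. destruct (block_pos i) as [j r] eqn:E.
  rewrite (block_weight_of_pos i j r E). unfold block_weight.
  rewrite (block_pos_S i j r E). destruct (Nat.ltb_spec (S r) (block_len j)); cbn [fst]; [lra|].
  apply Rinv_le_contravar; [apply block_len_pos | apply le_INR, block_len_mono; lia].
Qed.

Lemma block_weight_divergent : divergent block_weight.
Proof.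
  intros M. apply NNPP. intros Hno.
  assert (HM : forall n, psum block_weight n <= M)
    by (intros n; apply Rnot_lt_le; intros h; apply Hno; eauto).
  destruct (INR_unbounded M) as [J0 HJ0].
  set (c := / INR (block_len J0)).
  assert (Hc : 0 < c) by apply Rinv_0_lt_compat, block_len_pos.
  assert (Hw : forall i, c <= block_weight i).
  { intros i. destruct (block_pos i) as [j r] eqn:E. rewrite (block_weight_of_pos i j r E).
    assert (INR j <= M).
    { specialize (HM i). rewrite (psum_block_weight i j r E) in HM.
      assert (0 <= INR r / INR (block_len j)) by (apply Rdiv_le_0_compat; [apply pos_INR | apply block_len_pos]).
      lra. }
    apply Rinv_le_contravar; [apply block_len_pos | apply le_INR, block_len_mono].
    apply INR_le. lra. }
  assert (Hlow : forall n, INR n * c <= psum block_weight n).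
  { induction n as [|n IH]; simpl psum; [simpl; lra | rewrite S_INR; specialize (Hw n); lra]. }
  destruct (INR_unbounded (M / c)) as [n Hn].
  specialize (Hlow n). specialize (HM n).
  apply (Rmult_lt_compat_r c) in Hn; auto. unfold Rdiv in Hn. rewrite Rmult_assoc, Rinv_l in Hn by lra.
  lra.
Qed.

Lemma psum_block_weight_b_le n : psum (fun i => block_weight i * b i) n <= 2 * b 0%nat.
Proof.
  destruct (block_pos n) as [j r] eqn:E.
  pose proof (psum_block_weight_b n j r E). pose proof (block_pos_bounds n j r E) as [Hr _].
  assert (Hhj : 0 < (/ 2) ^ j) by (apply pow_lt; lra).
  assert (INR r / INR (block_len j) <= 1).
  { pose proof (block_len_pos j). apply (Rmult_le_reg_r (INR (block_len j))); auto.
    unfold Rdiv. rewrite Rmult_assoc, Rinv_l, Rmult_1_r, Rmult_1_l by lra. apply le_INR. lia. }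
  assert ((/ 2) ^ j * (INR r / INR (block_len j)) <= (/ 2) ^ j)
    by (rewrite <- Rmult_1_r; apply Rmult_le_compat_l; lra).
  assert (b 0%nat * (2 - 2 * (/ 2) ^ j + (/ 2) ^ j * (INR r / INR (block_len j))) <= b 0%nat * 2)
    by (apply Rmult_le_compat_l; [left; apply b_pos | lra]).
  lra.
Qed.

End BlockWeight.

Lemma exists_weight_summing (b : nat -> R) : (forall i, 0 < b i) -> (forall i, b (S i) <= b i) ->
  (forall eps, 0 < eps -> exists n, b n < eps) ->
  exists w, nonincr_weight w /\ 0 < w 0%nat /\ divergent w /\
    forall n, psum (fun i => w i * b i) n <= 2 * b 0%nat.
Proof.
  intros Hpos Hdec Hlim.
  destruct (choice (fun j n => b n <= b 0%nat * (/ 2) ^ j)) as [tau Htau].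
  { intros j. destruct (Hlim (b 0%nat * (/ 2) ^ j)) as [n Hn].
    - apply Rmult_lt_0_compat; [apply Hpos | apply pow_lt; lra].
    - exists n. lra. }
  exists (block_weight tau). split; [|split; [|split]].
  - apply block_weight_nonincr.
  - apply Rinv_0_lt_compat, block_len_pos.
  - apply block_weight_divergent.
  - apply psum_block_weight_b_le; auto.
Qed.

(** * Symmetric sequence spaces and their fundamental function *)

Definition indic (n : nat) : rseq := trunc (fun _ => 1) n.

Lemma indic_val n k : indic n k = if Nat.ltb k n then 1 else 0.
Proof. apply trunc_val. Qed.

Lemma abs_indic_le n k : Rabs (indic n k) <= 1.
Proof. rewrite indic_val. destruct (Nat.ltb k n); rewrite ?Rabs_R1, ?Rabs_R0; lra. Qed.

Lemma symmetric_abs_le E N x y : symmetric_seq_space E N -> bounded_seq x -> E y ->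
  (forall k, Rabs (x k) <= Rabs (y k)) -> E x /\ N x <= N y.
Proof.
  intros HE Hb Hy H. pose proof HE as (_ & _ & _ & Ebdd & _ & _ & _ & _ & _ & Esym).
  apply Esym; auto. intros n. apply mu_le_of_abs_le; auto.
Qed.

Lemma symmetric_norm_pos E N x k : symmetric_seq_space E N -> E x -> x k <> 0 -> 0 < N x.
Proof.
  intros HE Hx Hk. pose proof HE as (_ & _ & _ & _ & Npos & Nzero & _).
  destruct (Req_dec (N x) 0) as [h|h]; [exfalso; exact (Hk (Nzero x Hx h k)) | specialize (Npos x Hx); lra].
Qed.

Lemma mu_le_of_spike z x a n : bounded_seq x -> 0 <= a -> a <= mu x 0 ->
  (forall k, Rabs (z k) <= a) -> (forall k, k <> n -> z k = 0) ->
  bounded_seq z /\ forall j, mu z j <= mu x j.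
Proof.
  intros Hb Ha Hax Hza Hzn.
  assert (Hbz : bounded_seq z) by (exists a; auto).
  split; auto. intros [|j].
  - eapply Rle_trans; [apply mu_le_of_sup|]; eauto.
  - eapply Rle_trans; [apply (mu_finite_support _ (n :: nil)); auto | apply mu_nonneg; auto].
    + intros k Hk. apply Hzn. intros ->. apply Hk. left; auto.
    + simpl; lia.
Qed.

Lemma unitv_spike n : (forall k, Rabs (unitv n k) <= 1) /\ (forall k, k <> n -> unitv n k = 0).
Proof.
  split; intros k; unfold unitv; destruct (Nat.eqb_spec k n); rewrite ?Rabs_R1, ?Rabs_R0; try lra; tauto.
Qed.

Lemma symmetric_unitv E N x0 k0 : symmetric_seq_space E N -> E x0 -> x0 k0 <> 0 ->
  forall n, E (unitv n).
Proof.
  intros HE Hx0 Hk0 n. pose proof HE as (_ & _ & Escal & Ebdd & _ & _ & _ & _ & _ & Esym).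
  set (a := Rabs (x0 k0)). assert (Ha : 0 < a) by (apply Rabs_pos_lt; auto).
  destruct (mu_le_of_spike (seq_scal a (unitv n)) x0 a n (Ebdd _ Hx0)) as [Hbz Hmu].
  - lra.
  - apply abs_le_mu0, Ebdd, Hx0.
  - intros k. unfold seq_scal. rewrite Rabs_mult, (Rabs_pos_eq a) by lra.
    pose proof (proj1 (unitv_spike n) k). nra.
  - intros k Hk. unfold seq_scal. rewrite (proj2 (unitv_spike n) k Hk). ring.
  - replace (unitv n) with (seq_scal (/ a) (seq_scal a (unitv n)))
      by (apply functional_extensionality; intros k; unfold seq_scal; field; lra).
    apply Escal, (Esym _ x0); auto.
Qed.

Lemma symmetric_norm_unitv E N k : symmetric_seq_space E N -> (forall n, E (unitv n)) ->
  N (unitv k) = N (unitv 0).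
Proof.
  intros HE Hu. pose proof HE as (_ & _ & _ & _ & _ & _ & _ & _ & _ & Esym).
  assert (Hle : forall a b, N (unitv a) <= N (unitv b)).
  { intros a b. destruct (mu_le_of_spike (unitv a) (unitv b) 1 a (unitv_bounded b)) as [Hb Hmu];
      try apply unitv_spike; [lra | |].
    - eapply Rle_trans; [|apply (abs_le_mu0 _ b (unitv_bounded b))].
      unfold unitv. rewrite Nat.eqb_refl, Rabs_R1. lra.
    - apply (Esym _ (unitv b)); auto. }
  apply Rle_antisym; apply Hle.
Qed.

Lemma symmetric_trunc E N x : symmetric_seq_space E N -> (forall n, E (unitv n)) ->
  forall n, E (trunc x n).
Proof.
  intros HE Hu n. pose proof HE as (Ez & Eadd & Escal & _).
  induction n as [|n IH]; simpl; auto.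
Qed.

(* The rearrangement of [x] dominates [mu x i] on [i + 1] coordinates. *)
Lemma mu_mul_fundamental_le E N x i : symmetric_seq_space E N -> (forall n, E (unitv n)) -> E x ->
  mu x i * N (indic (S i)) <= N x.
Proof.
  intros HE Hu Hx. pose proof HE as (_ & _ & _ & Ebdd & _ & _ & Nscal & _ & _ & Esym).
  pose proof (Ebdd x Hx) as Hbx. pose proof (mu_nonneg x i Hbx) as Hm0.
  set (z := seq_scal (mu x i) (indic (S i))).
  assert (Hzb : forall k, Rabs (z k) <= mu x i).
  { intros k. unfold z, seq_scal. rewrite Rabs_mult, Rabs_pos_eq by auto.
    pose proof (abs_indic_le (S i) k). nra. }
  assert (Hbz : bounded_seq z) by (exists (mu x i); auto).
  destruct (Esym z x Hbz Hx) as [_ Hle].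
  { intros j. destruct (Nat.le_gt_cases j i) as [h|h].
    - eapply Rle_trans; [apply (mu_le_of_sup _ (mu x i)); auto | apply mu_antitone; auto].
    - eapply Rle_trans; [apply (mu_finite_support _ (seq 0 (S i))); auto | apply mu_nonneg; auto].
      + intros k Hk. unfold z, seq_scal. rewrite indic_val. destruct (Nat.ltb_spec k (S i)); [|ring].
        exfalso. apply Hk, in_seq. lia.
      + rewrite length_seq. lia. }
  unfold z in Hle. rewrite Nscal, Rabs_pos_eq in Hle by (auto; apply (symmetric_trunc E N); auto).
  exact Hle.
Qed.

Lemma fundamental_mono E N n m : symmetric_seq_space E N -> (forall n, E (unitv n)) ->
  (n <= m)%nat -> N (indic n) <= N (indic m).
Proof.
  intros HE Hu Hnm. pose proof HE as (_ & _ & _ & Ebdd & _).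
  assert (Hind : forall n, E (indic n)) by (intros; apply (symmetric_trunc E N); auto).
  refine (proj2 (symmetric_abs_le E N _ _ HE (Ebdd _ (Hind n)) (Hind m) _)).
  intros k. rewrite !indic_val.
  destruct (Nat.ltb_spec k n), (Nat.ltb_spec k m); try lia; rewrite ?Rabs_R1, ?Rabs_R0; lra.
Qed.

(* With [phi (i+1) = N (indic (i+1))], [mu x i <= N x / phi (i+1)], so a weight summing
   [b i = phi (i+1)^-2] embeds [E] into the Lorentz space. *)
Lemma lorentz_superset E N : symmetric_seq_space E N -> (forall n, E (unitv n)) ->
  (forall M, exists n, M < N (indic n)) ->
  exists w, nonincr_weight w /\ 0 < w 0%nat /\ divergent w /\ forall x, E x -> lorentz w x.
Proof.
  intros HE Hu Hunb. pose proof HE as (_ & _ & _ & Ebdd & _).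
  set (phi := fun i => N (indic (S i))).
  assert (Hphi1 : 0 < N (indic 1)).
  { apply (symmetric_norm_pos E N _ 0 HE); [apply (symmetric_trunc E N); auto | rewrite indic_val; simpl; lra]. }
  assert (Hphip : forall i, N (indic 1) <= phi i) by (intros; apply (fundamental_mono E N); auto; lia).
  set (b := fun i => / (phi i * phi i)).
  assert (Hbpos : forall i, 0 < b i).
  { intros i. specialize (Hphip i). apply Rinv_0_lt_compat. nra. }
  assert (Hbdec : forall i, b (S i) <= b i).
  { intros i. pose proof (Hphip i).
    assert (phi i <= phi (S i)) by (apply (fundamental_mono E N); auto).
    apply Rinv_le_contravar; [nra | apply Rmult_le_compat; lra]. }
  assert (Hblim : forall eps, 0 < eps -> exists n, b n < eps).
  { intros eps He. destruct (Hunb (/ eps + 1)) as [n Hn]. exists n.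
    assert (N (indic n) <= phi n) by (apply (fundamental_mono E N); auto).
    pose proof (Hphip n). assert (0 < / eps) by (apply Rinv_0_lt_compat; auto).
    assert (phi n * 1 <= phi n * phi n) by (apply Rmult_le_compat_l; lra).
    unfold b. rewrite <- (Rinv_inv eps). apply Rinv_lt_contravar; [apply Rmult_lt_0_compat|]; lra. }
  destruct (exists_weight_summing b Hbpos Hbdec Hblim) as [w [Hw [Hw0 [Hd Hwb]]]].
  exists w. split; [auto | split; [auto | split; [auto|]]].
  intros x Hx. pose proof (Ebdd x Hx) as Hbx.
  exists (N x * N x * (2 * b 0%nat)). intros l Hl.
  eapply Rle_trans; [apply wsum_le_mu_sqsum; auto|].
  eapply Rle_trans; [|apply Rmult_le_compat_l; [apply Rle_0_sqr | apply (Hwb (length l))]].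
  rewrite <- psum_scal. apply psum_le. intros i.
  assert (Hp : 0 < phi i) by (specialize (Hphip i); lra).
  assert (Hmu : mu x i <= N x / phi i).
  { apply (Rmult_le_reg_r (phi i)); auto. unfold Rdiv. rewrite Rmult_assoc, Rinv_l, Rmult_1_r by lra.
    apply (mu_mul_fundamental_le E N); auto. }
  replace (N x * N x * (w i * b i)) with (w i * ((N x / phi i) * (N x / phi i))) by (unfold b; field; lra).
  apply Rmult_le_compat_l; [apply Hw|]. pose proof (mu_nonneg x i Hbx). apply Rmult_le_compat; lra.
Qed.

Section BoundedFundamental.

Variables (E : rseq -> Prop) (N : rseq -> R).
Hypothesis HE : symmetric_seq_space E N.
Hypothesis E_unitv : forall n, E (unitv n).

Lemma symmetric_sub x y : E x -> E y -> E (seq_sub x y).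
Proof.
  intros Hx Hy. pose proof HE as (_ & Eadd & Escal & _).
  rewrite (seq_sub_add_opp). apply Eadd, Escal; auto.
Qed.

Lemma symmetric_coord_le x k : E x -> N (unitv 0) * Rabs (x k) <= N x.
Proof.
  intros Hx. pose proof HE as (_ & _ & _ & Ebdd & _ & _ & Nscal & _).
  set (z := seq_scal (Rabs (x k)) (unitv k)).
  assert (Hz : forall j, Rabs (z j) <= Rabs (x j)).
  { intros j. unfold z, seq_scal, unitv. destruct (Nat.eqb_spec j k) as [->|h].
    - rewrite Rmult_1_r, Rabs_Rabsolu. lra.
    - rewrite Rmult_0_r, Rabs_R0. apply Rabs_pos. }
  assert (Hbz : bounded_seq z).
  { destruct (Ebdd x Hx) as [M HM]. exists M. intros j. specialize (Hz j). specialize (HM j). lra. }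
  destruct (symmetric_abs_le E N z x HE Hbz Hx Hz) as [_ Hle].
  unfold z in Hle. rewrite Nscal, Rabs_Rabsolu, (symmetric_norm_unitv E N k HE E_unitv) in Hle by auto.
  lra.
Qed.

Lemma symmetric_linf_le x : E x -> N (unitv 0) * linf_norm x <= N x.
Proof.
  intros Hx. pose proof HE as (_ & _ & _ & Ebdd & _).
  assert (Hc : 0 < N (unitv 0)) by (apply (symmetric_norm_pos E N _ 0 HE); auto; compute; lra).
  destruct (linf_norm_spec x (Ebdd x Hx)) as [_ Hsup].
  assert (linf_norm x <= N x / N (unitv 0)).
  { apply Hsup. intros k. apply (Rmult_le_reg_l (N (unitv 0))); auto.
    replace (N (unitv 0) * (N x / N (unitv 0))) with (N x) by (field; lra).
    apply symmetric_coord_le; auto. }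
  apply (Rmult_le_compat_l (N (unitv 0))) in H; [|lra].
  replace (N (unitv 0) * (N x / N (unitv 0))) with (N x) in H by (field; lra). exact H.
Qed.

(* If [E] contains a sequence bounded away from zero on an infinite set, it contains the
   constant sequence [1] and hence all of l_infty. *)
Lemma symmetric_eq_linf x1 : E x1 -> ~ c0_seq x1 -> is_linf_equiv E N.
Proof.
  intros Hx1 Hnc. pose proof HE as (_ & _ & Escal & Ebdd & _ & _ & Nscal & _ & _ & Esym).
  destruct (not_c0_large_lists x1 Hnc) as [eps [He Hl]].
  set (one := fun _ : nat => 1).
  assert (Hbone : bounded_seq one) by (exists 1; intros; unfold one; rewrite Rabs_R1; lra).
  set (x2 := seq_scal (/ eps) x1).
  assert (Hx2 : E x2) by (apply Escal; auto).
  assert (Hone : E one).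
  { apply (Esym one x2 Hbone Hx2). intros j.
    eapply Rle_trans; [apply (mu_le_of_sup _ 1); auto; [lra | intros; unfold one; rewrite Rabs_R1; lra]|].
    destruct (Hl (S j)) as [l [H1 [H2 H3]]].
    apply (mu_ge_of_list x2 j 1 l (Ebdd _ Hx2) H1); [lia|].
    intros k Hk. unfold x2, seq_scal.
    rewrite Rabs_mult, Rabs_pos_eq by (left; apply Rinv_0_lt_compat; auto).
    specialize (H3 k Hk). apply (Rmult_le_reg_l eps); auto.
    rewrite <- Rmult_assoc, Rinv_r by lra. lra. }
  assert (Hall : forall y, bounded_seq y -> E y /\ N y <= N one * linf_norm y).
  { intros y Hy. destruct (linf_norm_spec y Hy) as [Hsup _].
    assert (HL : 0 <= linf_norm y) by (pose proof (Hsup 0%nat); pose proof (Rabs_pos (y 0%nat)); lra).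
    destruct (symmetric_abs_le E N y (seq_scal (linf_norm y) one) HE Hy (Escal _ _ Hone)) as [Ey Hle].
    - intros k. unfold seq_scal, one. rewrite Rmult_1_r, (Rabs_pos_eq (linf_norm y) HL). apply Hsup.
    - split; auto. rewrite Nscal, Rabs_pos_eq in Hle by auto. lra. }
  split; [intros x; split; [apply Ebdd | apply Hall]|].
  exists (N (unitv 0)), (N one).
  split; [apply (symmetric_norm_pos E N _ 0 HE); auto; compute; lra|].
  split; [apply (symmetric_norm_pos E N _ 0 HE); auto; unfold one; lra|].
  intros x Hx. split; [apply symmetric_linf_le; auto | apply Hall, Ebdd, Hx].
Qed.

Variable Mp : R.
Hypothesis fundamental_le : forall n, N (indic n) <= Mp.

Lemma symmetric_dominated z a m : bounded_seq z -> 0 <= a ->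
  (forall k, Rabs (z k) <= Rabs (a * indic m k)) -> E z /\ N z <= a * Mp.
Proof.
  intros Hbz Ha Hzk. pose proof HE as (_ & _ & Escal & _ & _ & _ & Nscal & _).
  assert (Hind : E (indic m)) by (apply (symmetric_trunc E N); auto).
  destruct (symmetric_abs_le E N z (seq_scal a (indic m)) HE Hbz (Escal _ _ Hind) Hzk) as [Ez Hle].
  split; auto. rewrite Nscal, Rabs_pos_eq in Hle by auto.
  pose proof (Rmult_le_compat_l a _ _ Ha (fundamental_le m)). lra.
Qed.

Lemma symmetric_trunc_cauchy x : c0_seq x -> forall eps, 0 < eps -> exists n0, forall m n,
  (n0 <= m)%nat -> (n0 <= n)%nat -> N (seq_sub (trunc x m) (trunc x n)) < eps.
Proof.
  intros Hx eps He.
  assert (HMp : 0 < Mp + 1).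
  { pose proof (fundamental_le 0). pose proof HE as (_ & _ & _ & _ & Npos & _).
    pose proof (Npos (indic 0) (symmetric_trunc E N _ HE E_unitv 0)). lra. }
  set (eta := eps / (2 * (Mp + 1))).
  assert (Heta : 0 < eta) by (apply Rdiv_lt_0_compat; lra).
  destruct (Hx eta Heta) as [n0 Hn0]. exists n0. intros m n Hm Hn.
  set (d := seq_sub (trunc x m) (trunc x n)).
  assert (Hd : forall k, Rabs (d k) <= Rabs (eta * indic (Nat.max m n) k)).
  { intros k. unfold d, seq_sub. rewrite !trunc_val, indic_val.
    destruct (Nat.ltb_spec k m), (Nat.ltb_spec k n), (Nat.ltb_spec k (Nat.max m n)); try lia;
      rewrite ?Rminus_diag, ?Rminus_0_r, ?Rminus_0_l, ?Rabs_Ropp, ?Rmult_1_r, ?Rmult_0_r, ?Rabs_R0,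
        ?(Rabs_pos_eq eta) by lra; try lra; left; apply Hn0; lia. }
  assert (Hbd : bounded_seq d).
  { exists eta. intros k. eapply Rle_trans; [apply Hd|].
    rewrite Rabs_mult, (Rabs_pos_eq eta) by lra. pose proof (abs_indic_le (Nat.max m n) k). nra. }
  destruct (symmetric_dominated d eta _ Hbd ltac:(lra) Hd) as [_ Hle].
  assert (eta * Mp < eps).
  { apply (Rmult_lt_reg_r (2 * (Mp + 1))); [lra|].
    replace (eta * Mp * (2 * (Mp + 1))) with (eps * Mp) by (unfold eta; field; lra).
    assert (0 < eps * (Mp + 2)) by (apply Rmult_lt_0_compat; lra). lra. }
  lra.
Qed.

Lemma symmetric_trunc_lim_eq x z : E z ->
  (forall eps, 0 < eps -> exists n0, forall n, (n0 <= n)%nat -> N (seq_sub (trunc x n) z) < eps) ->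
  x = z.
Proof.
  intros Hz Hconv.
  assert (Hc : 0 < N (unitv 0)) by (apply (symmetric_norm_pos E N _ 0 HE); auto; compute; lra).
  apply functional_extensionality. intros k. apply Rminus_diag_uniq.
  apply (eq_0_of_abs_le_mul_eps _ (/ N (unitv 0))); [left; apply Rinv_0_lt_compat; auto|].
  intros d Hd. destruct (Hconv d Hd) as [n0 Hn0].
  set (n1 := Nat.max n0 (S k)).
  pose proof (symmetric_coord_le _ k (symmetric_sub _ _ (symmetric_trunc E N x HE E_unitv n1) Hz)) as Hk.
  replace (seq_sub (trunc x n1) z k) with (x k - z k) in Hk
    by (unfold seq_sub; rewrite trunc_val; destruct (Nat.ltb_spec k n1); [ring | lia]).
  specialize (Hn0 n1 ltac:(unfold n1; lia)).
  apply (Rmult_le_reg_l (N (unitv 0))); auto.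
  replace (N (unitv 0) * (/ N (unitv 0) * d)) with d by (field; lra). lra.
Qed.

(* [x] is the [N]-limit of its truncations, which are dominated by [linf_norm x * indic n]. *)
Lemma symmetric_of_c0 x : c0_seq x -> E x /\ N x <= Mp * linf_norm x.
Proof.
  intros Hx. pose proof HE as (_ & _ & Escal & Ebdd & _ & _ & Nscal & Ntri & Ecomp & _).
  destruct (linf_norm_spec x (c0_bounded x Hx)) as [Lk _].
  set (L := linf_norm x) in *.
  assert (HL : 0 <= L) by (pose proof (Lk 0%nat); pose proof (Rabs_pos (x 0%nat)); lra).
  set (u := trunc x).
  assert (Hu : forall n, E (u n)) by (intros; apply (symmetric_trunc E N); auto).
  destruct (Ecomp u Hu (symmetric_trunc_cauchy x Hx)) as [z [Hz Hconv]].
  pose proof (symmetric_trunc_lim_eq x z Hz Hconv) as <-. split; auto.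
  apply Rle_plus_epsilon. intros eps He. destruct (Hconv eps He) as [n0 Hn0].
  specialize (Hn0 n0 (le_n _)).
  assert (Hun : N (u n0) <= L * Mp).
  { refine (proj2 (symmetric_dominated (u n0) L n0 (Ebdd _ (Hu n0)) HL _)).
    intros k. unfold u. rewrite trunc_val, indic_val. destruct (Nat.ltb k n0).
    - rewrite Rmult_1_r, (Rabs_pos_eq L HL). apply Lk.
    - rewrite Rmult_0_r, Rabs_R0. lra. }
  assert (Hd : E (seq_sub (u n0) x)) by (apply symmetric_sub; auto).
  replace x with (seq_add (u n0) (seq_scal (-1) (seq_sub (u n0) x))) at 1
    by (apply functional_extensionality; intros k; unfold seq_add, seq_scal, seq_sub; ring).
  eapply Rle_trans; [apply (Ntri _ _ (Hu n0) (Escal _ _ Hd))|].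
  rewrite (Nscal _ _ Hd), Rabs_left by lra. lra.
Qed.

Lemma symmetric_eq_c0 : (forall x, E x -> c0_seq x) -> is_c0_equiv E N.
Proof.
  intros E_c0. split; [intros x; split; [apply E_c0 | apply symmetric_of_c0]|].
  assert (HMp : 0 < Mp).
  { apply Rlt_le_trans with (2 := fundamental_le 1).
    apply (symmetric_norm_pos E N _ 0 HE); [apply (symmetric_trunc E N); auto | rewrite indic_val; simpl; lra]. }
  exists (N (unitv 0)), Mp.
  split; [apply (symmetric_norm_pos E N _ 0 HE); auto; compute; lra | split; [auto|]].
  intros x Hx. split; [apply symmetric_linf_le; auto | apply symmetric_of_c0, E_c0, Hx].
Qed.

End BoundedFundamental.

Lemma bounded_fundamental_c0_or_linf E N Mp : symmetric_seq_space E N ->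
  (forall n, E (unitv n)) -> (forall n, N (indic n) <= Mp) -> is_c0_equiv E N \/ is_linf_equiv E N.
Proof.
  intros HE Hu HMp. destruct (classic (exists x1, E x1 /\ ~ c0_seq x1)) as [[x1 [Hx1 Hnc]]|Hall].
  - right. apply (symmetric_eq_linf E N HE Hu x1); auto.
  - left. apply (symmetric_eq_c0 E N HE Hu Mp HMp).
    intros x Hx. apply NNPP. intros Hn. apply Hall. eauto.
Qed.


Lemma divergent_one : divergent (fun _ => 1).
Proof.
  assert (Hn : forall n, psum (fun _ => 1) n = INR n).
  { induction n as [|n IH]; [reflexivity|]. rewrite S_INR, <- IH. reflexivity. }
  intros M. destruct (INR_unbounded M) as [n Hn']. exists n. rewrite Hn. lra.
Qed.

Theorem corollary3p2 (E : rseq -> Prop) (N : rseq -> R) :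
  symmetric_seq_space E N ->
  ~ is_c0_equiv E N ->
  ~ is_linf_equiv E N ->
  exists (F : rseq -> Prop) (NF : rseq -> R),
    symmetric_seq_space F NF /\ reflexive F NF /\ (forall x, E x -> F x).
Proof.
  intros HE Hnc0 Hnlinf.
  destruct (classic (exists x0 k0, E x0 /\ x0 k0 <> 0)) as [[x0 [k0 [Hx0 Hk0]]] | Hzero].
  - pose proof (symmetric_unitv E N x0 k0 HE Hx0 Hk0) as Hu.
    destruct (classic (forall M, exists n, M < N (indic n))) as [Hunb | Hbdd].
    + destruct (lorentz_superset E N HE Hu Hunb) as [w [Hw [Hw0 [Hd HEw]]]].
      exists (lorentz w), (lorentz_norm w).
      split; [apply lorentz_symmetric | split; [apply lorentz_reflexive|]]; auto.
    + apply not_all_ex_not in Hbdd as [Mp HMp].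
      assert (Hle : forall n, N (indic n) <= Mp) by (intros n; apply Rnot_lt_le; intros h; eauto).
      destruct (bounded_fundamental_c0_or_linf E N Mp HE Hu Hle); tauto.
  - exists (lorentz (fun _ => 1)), (lorentz_norm (fun _ => 1)).
    assert (Hw : nonincr_weight (fun _ => 1)) by (split; intros; lra).
    split; [apply lorentz_symmetric | split; [apply lorentz_reflexive, divergent_one|]]; auto; try lra.
    intros x Hx. apply lorentz_of_zero. intros k. apply NNPP. intros Hk. apply Hzero. eauto.
Qed.
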